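(* Assume (H), (H1), and that $L$ has the KL-property at some $\bar z$, with associated $\eta\in(0,\infty]$, neighborhood $U$ and function $\varphi$. Let $\rho>0$ be such that $B(\bar z,\rho)\subset U$, let $C$ be a Lipschitz constant of $\nabla Q$ on $B(\bar z,\sqrt{2R}\rho)$, and $M=2r_+(C\sqrt{2R}+1/r_-)$. Let $(z_k)$ be generated by PAM from $z_0$, write $l_k=L(z_k)$, $\bar l=L(\bar z)$, and assume $\bar l<l_k<\bar l+\eta$ for all $k\ge0$ and $$M\varphi(l_0-\bar l)+2\sqrt{2r_+}\sqrt{l_0-\bar l}+\|z_0-\bar z\|_2<\rho.$$ Then $(z_k)$ converges to a critical point of $L$, and for all $k\ge0$: (i) $z_k\in B(\bar z,\rho)$; (ii) $\sum_{i=k+1}^\infty\|z_{i+1}-z_i\|_2\le M\varphi(l_k-\bar l)+\sqrt{2r_+}\sqrt{l_k-\bar l}$.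
   Context: Setting: $L(u^1,\dots,u^R,v^1,\dots,v^R)=\sum_{r=1}^Rf_r(u^r)+Q(u^1,\dots,v^R)+\sum_{r=1}^Rg_r(v^r)$ on $(\mathbb{R}^{n_1})^R\times(\mathbb{R}^{n_2})^R$. (H): $f_r,g_r$ proper lower semicontinuous with values in $\mathbb{R}\cup\{\infty\}$; $Q$ real-valued $C^1$ with $\nabla Q$ Lipschitz on bounded sets. (H1): $\inf L>-\infty$, $L(\cdot,u_0^2,\dots,v_0^R)$ proper, all proximal parameters $\lambda_k^r,\mu_k^r\in(r_-,r_+)$ for some $0<r_-<r_+$. PAM: for $k\ge0$, $r=1,\dots,R$ in order, $u_{k+1}^r\in\arg\min_u L(u_{k+1}^1,\dots,u_{k+1}^{r-1},u,u_k^{r+1},\dots,u_k^R,v_{k+1}^1,\dots,v_{k+1}^{r-1},v_k^r,\dots,v_k^R)+\frac{1}{2\lambda_k^r}\|u-u_k^r\|_2^2$, $v_{k+1}^r\in\arg\min_v L(u_{k+1}^1,\dots,u_{k+1}^r,u_k^{r+1},\dots,u_k^R,v_{k+1}^1,\dots,v_{k+1}^{r-1},v,v_k^{r+1},\dots,v_k^R)+\frac{1}{2\mu_k^r}\|v-v_k^r\|_2^2$; $z_k=(u_k^1,\dots,v_k^R)$. $\partial$ is the limiting subdifferential; critical points are $z$ with $0\in\partial L(z)$. KL-property: a proper lsc $f:\mathbb{R}^n\to\mathbb{R}\cup\{\infty\}$ has the KL-property at $\bar x\in\mathrm{dom}\,\partial f$ if there exist $\eta\in(0,\infty]$, a neighborhood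 $U$ of $\bar x$, and a continuous concave $\varphi:[0,\eta)\to[0,\infty)$ with $\varphi(0)=0$, $\varphi\in C^1(0,\eta)$, $\varphi'>0$ on $(0,\eta)$, such that $\varphi'(f(x)-f(\bar x))\,\mathrm{dist}(0,\partial f(x))\ge1$ for all $x\in U$ with $f(\bar x)<f(x)<f(\bar x)+\eta$. *)

From Stdlib Require Import Reals Lra Lia.
From Stdlib Require Vectors.Fin.
Open Scope R_scope.

Definition vec (n : nat) : Type := Fin.t n -> R.

Fixpoint fsum (n : nat) : (Fin.t n -> R) -> R :=
  match n return (Fin.t n -> R) -> R with
  | O => fun _ => 0
  | S m => fun f => f Fin.F1 + fsum m (fun i => f (Fin.FS i))
  end.

Definition vdot {n} (x y : vec n) : R := fsum n (fun i => x i * y i).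
Definition vsub {n} (x y : vec n) : vec n := fun i => x i - y i.
Definition vnorm2 {n} (x : vec n) : R := vdot x x.

Definition idx {m} (j : Fin.t m) : nat := proj1_sig (Fin.to_nat j).

(** Points z = (u^1,...,u^R, v^1,...,v^R) of (R^n1)^R x (R^n2)^R. *)
Definition pt (Rb n1 n2 : nat) : Type :=
  ((Fin.t Rb -> vec n1) * (Fin.t Rb -> vec n2))%type.

Section Pt.
Context {Rb n1 n2 : nat}.
Definition pdot (x y : pt Rb n1 n2) : R :=
  fsum Rb (fun r => vdot (fst x r) (fst y r)) + fsum Rb (fun r => vdot (snd x r) (snd y r)).
Definition psub (x y : pt Rb n1 n2) : pt Rb n1 n2 :=
  (fun r => vsub (fst x r) (fst y r), fun r => vsub (snd x r) (snd y r)).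
Definition pzero : pt Rb n1 n2 := (fun _ _ => 0, fun _ _ => 0).
Definition pnorm (x : pt Rb n1 n2) : R := sqrt (pdot x x).
End Pt.

(** Extended reals R U {+oo}: [None] stands for +oo. *)
Definition ereal : Type := option R.
Definition eplus (a b : ereal) : ereal :=
  match a, b with Some x, Some y => Some (x + y) | _, _ => None end.
Fixpoint efsum (n : nat) : (Fin.t n -> ereal) -> ereal :=
  match n return (Fin.t n -> ereal) -> ereal with
  | O => fun _ => Some 0
  | S m => fun f => eplus (f Fin.F1) (efsum m (fun i => f (Fin.FS i)))
  end.
Definition ele (a b : ereal) : Prop :=
  match a, b with
  | _, None => True
  | None, Some _ => False
  | Some x, Some y => x <= y
  end.
Definition ege (e : ereal) (c : R) : Prop := ele (Some c) e.
Definition egt (e : ereal) (c : R) : Prop :=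
  match e with None => True | Some x => c < x end.

(** proper: never -oo (automatic) and not identically +oo *)
Definition proper {X : Type} (f : X -> ereal) : Prop := exists x, f x <> None.

Definition lsc_wrt {X : Type} (dist : X -> X -> R) (f : X -> ereal) : Prop :=
  forall (x : X) (xs : nat -> X), Un_cv (fun k => dist (xs k) x) 0 ->
    forall c : R, egt (f x) c -> exists N, forall k, (N <= k)%nat -> egt (f (xs k)) c.

Definition vdist {n} (x y : vec n) : R := sqrt (vnorm2 (vsub x y)).
Definition pdist {Rb n1 n2} (x y : pt Rb n1 n2) : R := pnorm (psub x y).

(** Frechet subdifferential (unfolded liminf definition) *)
Definition frechet_sub {Rb n1 n2} (f : pt Rb n1 n2 -> ereal) (x w : pt Rb n1 n2) : Prop :=
  exists fx, f x = Some fx /\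
  forall eps, 0 < eps -> exists delta, 0 < delta /\
    forall y, pdist y x < delta ->
      ege (f y) (fx + pdot w (psub y x) - eps * pdist y x).

Definition limiting_sub {Rb n1 n2} (f : pt Rb n1 n2 -> ereal) (x w : pt Rb n1 n2) : Prop :=
  exists fx, f x = Some fx /\
  exists (xs ws : nat -> pt Rb n1 n2) (fs : nat -> R),
    (forall k, f (xs k) = Some (fs k)) /\
    Un_cv (fun k => pdist (xs k) x) 0 /\
    Un_cv fs fx /\
    (forall k, frechet_sub f (xs k) (ws k)) /\
    Un_cv (fun k => pdist (ws k) w) 0.

Definition below (eta : ereal) (s : R) : Prop :=
  match eta with None => True | Some e => s < e end.

Definition KL_at {Rb n1 n2} (f : pt Rb n1 n2 -> ereal) (xbar : pt Rb n1 n2)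
    (eta : ereal) (U : pt Rb n1 n2 -> Prop) (phi : R -> R) : Prop :=
  (exists w, limiting_sub f xbar w) /\
  (match eta with None => True | Some e => 0 < e end) /\
  (exists r, 0 < r /\ forall x, pdist x xbar < r -> U x) /\
  phi 0 = 0 /\
  (forall s, 0 <= s -> below eta s -> 0 <= phi s) /\
  (forall s, 0 <= s -> below eta s -> forall eps, 0 < eps -> exists delta, 0 < delta /\
      forall t, 0 <= t -> below eta t -> Rabs (t - s) < delta -> Rabs (phi t - phi s) < eps) /\
  (forall s t a, 0 <= s -> below eta s -> 0 <= t -> below eta t -> 0 <= a <= 1 ->
      a * phi s + (1 - a) * phi t <= phi (a * s + (1 - a) * t)) /\
  exists dphi : R -> R,
    (forall s, 0 < s -> below eta s -> derivable_pt_lim phi s (dphi s) /\ 0 < dphi s) /\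
    (forall s, 0 < s -> below eta s -> forall eps, 0 < eps -> exists delta, 0 < delta /\
        forall t, 0 < t -> below eta t -> Rabs (t - s) < delta -> Rabs (dphi t - dphi s) < eps) /\
    (* phi'(f x - f xbar) * dist(0, d f(x)) >= 1, with dist(0, emptyset) = +oo *)
    (forall x fx fb, U x -> f xbar = Some fb -> f x = Some fx ->
       fb < fx -> below eta (fx - fb) ->
       forall w, limiting_sub f x w -> 1 <= dphi (fx - fb) * pnorm w).

Definition Lfun {Rb n1 n2} (f : Fin.t Rb -> vec n1 -> ereal) (Q : pt Rb n1 n2 -> R)
    (g : Fin.t Rb -> vec n2 -> ereal) (z : pt Rb n1 n2) : ereal :=
  eplus (eplus (efsum Rb (fun r => f r (fst z r))) (Some (Q z)))
        (efsum Rb (fun r => g r (snd z r))).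

Definition is_C1_with_grad {Rb n1 n2} (Q : pt Rb n1 n2 -> R) (gQ : pt Rb n1 n2 -> pt Rb n1 n2) : Prop :=
  (forall x eps, 0 < eps -> exists delta, 0 < delta /\ forall y, pdist y x < delta ->
      Rabs (Q y - Q x - pdot (gQ x) (psub y x)) <= eps * pdist y x) /\
  (forall x eps, 0 < eps -> exists delta, 0 < delta /\ forall y, pdist y x < delta ->
      pdist (gQ y) (gQ x) < eps).

(** gradient Lipschitz on bounded sets (every bounded set lies in a closed ball) *)
Definition lip_on_bounded {Rb n1 n2} (gQ : pt Rb n1 n2 -> pt Rb n1 n2) : Prop :=
  forall (c : pt Rb n1 n2) (r : R), exists K, forall x y,
    pdist x c <= r -> pdist y c <= r -> pdist (gQ x) (gQ y) <= K * pdist x y.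

(** Intermediate points of a PAM sweep, built from z_k = zo and z_{k+1} = zn. *)
(* point (u_{k+1}^1..u_{k+1}^{r-1}, u, u_k^{r+1}..u_k^R, v_{k+1}^1..v_{k+1}^{r-1}, v_k^r..v_k^R) *)
Definition mix_u {Rb n1 n2} (zo zn : pt Rb n1 n2) (r : Fin.t Rb) (u : vec n1) : pt Rb n1 n2 :=
  (fun j => if Nat.ltb (idx j) (idx r) then fst zn j
            else if Nat.eqb (idx j) (idx r) then u else fst zo j,
   fun j => if Nat.ltb (idx j) (idx r) then snd zn j else snd zo j).
(* point (u_{k+1}^1..u_{k+1}^r, u_k^{r+1}..u_k^R, v_{k+1}^1..v_{k+1}^{r-1}, v, v_k^{r+1}..v_k^R) *)
Definition mix_v {Rb n1 n2} (zo zn : pt Rb n1 n2) (r : Fin.t Rb) (v : vec n2) : pt Rb n1 n2 :=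
  (fun j => if Nat.leb (idx j) (idx r) then fst zn j else fst zo j,
   fun j => if Nat.ltb (idx j) (idx r) then snd zn j
            else if Nat.eqb (idx j) (idx r) then v else snd zo j).

Definition is_argmin {X : Type} (h : X -> ereal) (x : X) : Prop :=
  forall y, ele (h x) (h y).

Definition PAM_seq {Rb n1 n2} (L : pt Rb n1 n2 -> ereal)
    (lam mu : nat -> Fin.t Rb -> R) (z : nat -> pt Rb n1 n2) : Prop :=
  forall (k : nat) (r : Fin.t Rb),
    is_argmin (fun u => eplus (L (mix_u (z k) (z (S k)) r u))
                 (Some (/ (2 * lam k r) * vnorm2 (vsub u (fst (z k) r)))))
              (fst (z (S k)) r) /\
    is_argmin (fun v => eplus (L (mix_v (z k) (z (S k)) r v))
                 (Some (/ (2 * mu k r) * vnorm2 (vsub v (snd (z k) r)))))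
              (snd (z (S k)) r).

Definition repl_u1 {Rb n1 n2} (z : pt Rb n1 n2) (u : vec n1) : pt Rb n1 n2 :=
  (fun j => if Nat.eqb (idx j) 0 then u else fst z j, snd z).

(* A sweep decreases L by at least
   |z_{k+1} - z_k|^2 / (2 r_+), and Fermat's rule for the 2R prox subproblems
   yields a subgradient of L at z_{k+1} of norm at most
   (C sqrt(2R) + 1/r_-) |z_{k+1} - z_k| as long as z_k and z_{k+1} lie in
   B(zbar, rho), because every intermediate point of the sweep then lies within
   sqrt 2 rho of zbar, where grad Q is C-Lipschitz.  With the KL inequality and
   the concavity of phi this gives, for d_k = |z_{k+1} - z_k|,
     2 d_{k+1} <= M (phi(l_{k+1} - lbar) - phi(l_{k+2} - lbar)) + d_k.
   Telescoping shows that the iterates never leave the ball and that (d_k) is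
   summable with the stated tail bound, so (z_k) converges to some zs.
   Lower semicontinuity and the prox inequalities force l_k -> L(zs), while
   the subgradients tend to 0; hence zs is critical. *)

From Stdlib Require Import Reals Lra Lia Psatz FunctionalExtensionality.
From Stdlib Require Vectors.Fin.
Open Scope R_scope.

(** * Finite sums *)

Lemma fsum_ext n (F G : Fin.t n -> R) : (forall i, F i = G i) -> fsum n F = fsum n G.
Proof.
  induction n as [|n IH]; simpl; intros E; [reflexivity|].
  rewrite E, (IH (fun i => F (Fin.FS i)) (fun i => G (Fin.FS i))); auto.
Qed.

Lemma fsum_add n (F G : Fin.t n -> R) : fsum n (fun i => F i + G i) = fsum n F + fsum n G.
Proof.
  induction n as [|n IH]; simpl; [lra|].
  rewrite (IH (fun i => F (Fin.FS i)) (fun i => G (Fin.FS i))); lra.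
Qed.

Lemma fsum_scal n c (F : Fin.t n -> R) : fsum n (fun i => c * F i) = c * fsum n F.
Proof.
  induction n as [|n IH]; simpl; [lra|].
  rewrite (IH (fun i => F (Fin.FS i))); lra.
Qed.

Lemma fsum_sub n (F G : Fin.t n -> R) : fsum n (fun i => F i - G i) = fsum n F - fsum n G.
Proof.
  rewrite (fsum_ext _ _ (fun i => F i + -1 * G i)) by (intros; ring).
  rewrite fsum_add, fsum_scal; ring.
Qed.

Lemma fsum_const n c : fsum n (fun _ => c) = INR n * c.
Proof. induction n as [|n IH]; simpl fsum; [simpl; lra|]. rewrite IH, S_INR; lra. Qed.

Lemma fsum_le n (F G : Fin.t n -> R) : (forall i, F i <= G i) -> fsum n F <= fsum n G.
Proof.
  induction n as [|n IH]; simpl; intros H; [lra|].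
  specialize (IH (fun i => F (Fin.FS i)) (fun i => G (Fin.FS i)) (fun i => H _)).
  specialize (H Fin.F1); lra.
Qed.

Lemma fsum_nonneg n (F : Fin.t n -> R) : (forall i, 0 <= F i) -> 0 <= fsum n F.
Proof. intros H. rewrite <- (Rmult_0_r (INR n)), <- fsum_const. now apply fsum_le. Qed.

Lemma fsum_le_const n (F : Fin.t n -> R) c : (forall i, F i <= c) -> fsum n F <= INR n * c.
Proof. intros H. rewrite <- fsum_const. now apply fsum_le. Qed.

Lemma fsum_term_le n (F : Fin.t n -> R) r : (forall i, 0 <= F i) -> F r <= fsum n F.
Proof.
  intros H. induction n as [|n IH]; [apply (Fin.case0 (fun _ => _) r)|].
  pattern r; apply Fin.caseS'; simpl.
  - pose proof (fsum_nonneg n (fun i => F (Fin.FS i)) (fun i => H _)); lra.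
  - intros p. pose proof (IH (fun i => F (Fin.FS i)) p (fun i => H _)). specialize (H Fin.F1). lra.
Qed.

Lemma cv_const c : Un_cv (fun _ => c) c.
Proof. intros eps He. exists 0%nat. intros. unfold R_dist. rewrite Rminus_diag, Rabs_R0. lra. Qed.

Lemma fsum_cv n (F : nat -> Fin.t n -> R) G :
  (forall i, Un_cv (fun k => F k i) (G i)) -> Un_cv (fun k => fsum n (F k)) (fsum n G).
Proof.
  induction n as [|n IH]; intros H; simpl.
  - apply cv_const.
  - apply CV_plus; [apply H|]. apply (IH (fun k i => F k (Fin.FS i))). intros; apply H.
Qed.

Lemma fin_uniform_delta n (P : Fin.t n -> R -> Prop) :
  (forall j, exists d, 0 < d /\ forall t, t < d -> P j t) ->
  exists d, 0 < d /\ forall j t, t < d -> P j t.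
Proof.
  induction n as [|n IH]; intros H.
  - exists 1; split; [lra|]. intros j; apply (Fin.case0 (fun _ => _) j).
  - destruct (IH (fun j => P (Fin.FS j)) (fun j => H _)) as [d1 [Hd1 H1]].
    destruct (H Fin.F1) as [d2 [Hd2 H2]].
    exists (Rmin d1 d2); split; [now apply Rmin_pos|].
    pose proof (Rmin_l d1 d2); pose proof (Rmin_r d1 d2).
    intros j; pattern j; apply Fin.caseS'; intros; [apply H2|apply H1]; lra.
Qed.

Lemma idx_FS n (i : Fin.t n) : idx (Fin.FS i) = S (idx i).
Proof. unfold idx; simpl. now destruct (Fin.to_nat i). Qed.

Lemma idx_lt n (i : Fin.t n) : (idx i < n)%nat.
Proof. unfold idx. now destruct (Fin.to_nat i). Qed.

Lemma idx_inj n (i j : Fin.t n) : idx i = idx j -> i = j.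
Proof. apply Fin.to_nat_inj. Qed.

Lemma idx_of_nat p n (H : (p < n)%nat) : idx (Fin.of_nat_lt H) = p.
Proof. unfold idx. now rewrite Fin.to_nat_of_nat. Qed.

Lemma fsum_single n (F : Fin.t n -> R) r :
  (forall j, idx j <> idx r -> F j = 0) -> fsum n F = F r.
Proof.
  induction n as [|n IH]; [apply (Fin.case0 (fun _ => _) r)|].
  pattern r; apply Fin.caseS'; simpl; [intros H|intros p H].
  - rewrite (fsum_ext _ _ (fun _ => 0)), fsum_const; [ring|].
    intros i; apply H. rewrite idx_FS. discriminate.
  - rewrite H by (rewrite idx_FS; discriminate).
    rewrite (IH (fun i => F (Fin.FS i)) p); [ring|].
    intros j Hj; apply H. rewrite !idx_FS; lia.
Qed.

Definition fsum_below n (T : Fin.t n -> R) (i : nat) : R :=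
  fsum n (fun j => if Nat.ltb (idx j) i then T j else 0).

Lemma fsum_below_0 n (T : Fin.t n -> R) : fsum_below n T 0 = 0.
Proof.
  unfold fsum_below. rewrite (fsum_ext _ _ (fun _ => 0)), fsum_const; [ring|].
  intros j; destruct (Nat.ltb_spec (idx j) 0); [lia|reflexivity].
Qed.

Lemma fsum_below_full n (T : Fin.t n -> R) : fsum_below n T n = fsum n T.
Proof.
  apply fsum_ext; intros j. pose proof (idx_lt n j).
  destruct (Nat.ltb_spec (idx j) n); [reflexivity|lia].
Qed.

Lemma fsum_below_S n (T : Fin.t n -> R) i (Hi : (i < n)%nat) :
  fsum_below n T (S i) = fsum_below n T i + T (Fin.of_nat_lt Hi).
Proof.
  set (r := Fin.of_nat_lt Hi).
  assert (E : fsum n (fun j => (if Nat.ltb (idx j) (S i) then T j else 0)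
                              - (if Nat.ltb (idx j) i then T j else 0)) = T r).
  { rewrite (fsum_single _ _ r); unfold r; rewrite ?idx_of_nat.
    - rewrite Nat.ltb_irrefl, (proj2 (Nat.ltb_lt i (S i))) by lia. ring.
    - intros j Hj. destruct (Nat.ltb_spec (idx j) (S i)), (Nat.ltb_spec (idx j) i); try lia; ring. }
  rewrite fsum_sub in E. unfold fsum_below. lra.
Qed.

(** * Euclidean geometry of points *)

(** Points of [pt Rb n1 n2] are handled through their scalar coordinates. *)
Definition Ix (Rb n1 n2 : nat) : Type := ((Fin.t Rb * Fin.t n1) + (Fin.t Rb * Fin.t n2))%type.

Section Coordinates.
Context {Rb n1 n2 : nat}.
Implicit Types (x y : pt Rb n1 n2) (F G : Ix Rb n1 n2 -> R).

Definition coord x (i : Ix Rb n1 n2) : R :=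
  match i with inl (r, j) => fst x r j | inr (r, j) => snd x r j end.
Definition of_coord F : pt Rb n1 n2 := (fun r j => F (inl (r, j)), fun r j => F (inr (r, j))).
Definition csum F : R :=
  fsum Rb (fun r => fsum n1 (fun j => F (inl (r, j))))
  + fsum Rb (fun r => fsum n2 (fun j => F (inr (r, j)))).
Definition cnorm F : R := sqrt (csum (fun i => F i * F i)).

Lemma coord_of_coord F i : coord (of_coord F) i = F i.
Proof. now destruct i as [[r j]|[r j]]. Qed.

Lemma pdist_cnorm x y : pdist x y = cnorm (fun i => coord x i - coord y i).
Proof. reflexivity. Qed.
Lemma pnorm_cnorm x : pnorm x = cnorm (coord x).
Proof. reflexivity. Qed.

Lemma csum_ext F G : (forall i, F i = G i) -> csum F = csum G.
Proof. intros H; unfold csum; f_equal; apply fsum_ext; intros; apply fsum_ext; intros; apply H. Qed.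

Lemma csum_le F G : (forall i, F i <= G i) -> csum F <= csum G.
Proof. intros H; unfold csum; apply Rplus_le_compat; apply fsum_le; intros; apply fsum_le; intros; apply H. Qed.

Lemma csum_add F G : csum (fun i => F i + G i) = csum F + csum G.
Proof.
  unfold csum.
  rewrite (fsum_ext _ (fun r => fsum n1 _) (fun r => fsum n1 (fun j => F (inl (r, j))) + fsum n1 (fun j => G (inl (r, j))))),
          (fsum_ext _ (fun r => fsum n2 _) (fun r => fsum n2 (fun j => F (inr (r, j))) + fsum n2 (fun j => G (inr (r, j))))),
          !fsum_add by (intros; apply fsum_add).
  ring.
Qed.

Lemma csum_scal c F : csum (fun i => c * F i) = c * csum F.
Proof.
  unfold csum.
  rewrite (fsum_ext _ (fun r => fsum n1 _) (fun r => c * fsum n1 (fun j => F (inl (r, j))))),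
          (fsum_ext _ (fun r => fsum n2 _) (fun r => c * fsum n2 (fun j => F (inr (r, j))))),
          !fsum_scal by (intros; apply fsum_scal).
  ring.
Qed.

Lemma csum_nonneg F : (forall i, 0 <= F i) -> 0 <= csum F.
Proof.
  intros H. unfold csum.
  apply Rplus_le_le_0_compat; apply fsum_nonneg; intros; apply fsum_nonneg; intros; apply H.
Qed.

Lemma csum_term_le F i : (forall i, 0 <= F i) -> F i <= csum F.
Proof.
  intros H. unfold csum.
  assert (P1 : forall r, 0 <= fsum n1 (fun j => F (inl (r, j)))) by (intros; apply fsum_nonneg; intros; apply H).
  assert (P2 : forall r, 0 <= fsum n2 (fun j => F (inr (r, j)))) by (intros; apply fsum_nonneg; intros; apply H).
  pose proof (fsum_nonneg _ _ P1); pose proof (fsum_nonneg _ _ P2).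
  destruct i as [[r j]|[r j]].
  - pose proof (fsum_term_le n1 (fun j => F (inl (r, j))) j (fun _ => H _)).
    pose proof (fsum_term_le Rb _ r P1); simpl in *; lra.
  - pose proof (fsum_term_le n2 (fun j => F (inr (r, j))) j (fun _ => H _)).
    pose proof (fsum_term_le Rb _ r P2); simpl in *; lra.
Qed.

Lemma csum_cv (F : nat -> Ix Rb n1 n2 -> R) G :
  (forall i, Un_cv (fun k => F k i) (G i)) -> Un_cv (fun k => csum (F k)) (csum G).
Proof. intros H. apply CV_plus; apply fsum_cv; intros r; apply fsum_cv; intros j; apply H. Qed.

Lemma csum_sq_nonneg F : 0 <= csum (fun i => F i * F i).
Proof. apply csum_nonneg; intros; nra. Qed.

Lemma cnorm_nonneg F : 0 <= cnorm F.
Proof. apply sqrt_pos. Qed.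

Lemma cnorm_sq F : cnorm F * cnorm F = csum (fun i => F i * F i).
Proof. apply sqrt_sqrt, csum_sq_nonneg. Qed.

Lemma cnorm_ext F G : (forall i, F i = G i) -> cnorm F = cnorm G.
Proof. intros H; unfold cnorm; f_equal; apply csum_ext; intros; now rewrite H. Qed.

Lemma cnorm_le F G : (forall i, F i * F i <= G i * G i) -> cnorm F <= cnorm G.
Proof. intros H. apply sqrt_le_1; try apply csum_sq_nonneg. now apply csum_le. Qed.

Lemma cnorm_scal c F : cnorm (fun i => c * F i) = Rabs c * cnorm F.
Proof.
  unfold cnorm. rewrite (csum_ext _ (fun i => (c * c) * (F i * F i))) by (intros; ring).
  rewrite csum_scal, sqrt_mult by (nra || apply csum_sq_nonneg).
  f_equal. apply sqrt_Rsqr_abs.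
Qed.

Lemma coord_le_cnorm F i : Rabs (F i) <= cnorm F.
Proof.
  unfold cnorm. rewrite <- sqrt_Rsqr_abs.
  apply sqrt_le_1; [apply Rle_0_sqr|apply csum_sq_nonneg|].
  apply (csum_term_le (fun i => F i * F i)). intros; nra.
Qed.

Lemma discriminant_nonpos A X B :
  0 <= B -> (forall t, 0 <= A + 2 * t * X + t * t * B) -> X * X <= A * B.
Proof.
  intros HB H. destruct (Req_dec B 0) as [->|E].
  - destruct (Req_dec X 0) as [->|E]; [nra|].
    specialize (H (- (A + 1) / (2 * X))).
    replace (A + 2 * (- (A + 1) / (2 * X)) * X + - (A + 1) / (2 * X) * (- (A + 1) / (2 * X)) * 0)
      with (-1) in H by (field; auto). lra.
  - specialize (H (- X / B)).
    replace (A + 2 * (- X / B) * X + - X / B * (- X / B) * B) with (A - X * X / B) in H by (field; lra).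
    assert (X * X / B * B = X * X) by (field; lra). nra.
Qed.

Lemma csum_cauchy_schwarz F G : Rabs (csum (fun i => F i * G i)) <= cnorm F * cnorm G.
Proof.
  assert (D : csum (fun i => F i * G i) * csum (fun i => F i * G i)
              <= csum (fun i => F i * F i) * csum (fun i => G i * G i)).
  { apply discriminant_nonpos; [apply csum_sq_nonneg|]. intros t.
    rewrite <- !csum_scal, <- !csum_add.
    rewrite (csum_ext _ (fun i => (F i + t * G i) * (F i + t * G i))) by (intros; ring).
    apply csum_sq_nonneg. }
  rewrite <- !cnorm_sq in D.
  pose proof (cnorm_nonneg F); pose proof (cnorm_nonneg G).
  replace (cnorm F * cnorm F * (cnorm G * cnorm G)) with ((cnorm F * cnorm G)²) in D by (unfold Rsqr; ring).
  apply Rsqr_le_abs_0 in D. rewrite (Rabs_right (_ * _)) in D by nra. exact D.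
Qed.

Lemma cnorm_triangle F G : cnorm (fun i => F i + G i) <= cnorm F + cnorm G.
Proof.
  pose proof (cnorm_nonneg F); pose proof (cnorm_nonneg G).
  apply Rsqr_incr_0_var; [|lra]. unfold Rsqr. rewrite cnorm_sq.
  rewrite (csum_ext _ (fun i => F i * F i + (2 * (F i * G i) + G i * G i))) by (intros; ring).
  rewrite !csum_add, csum_scal, <- !cnorm_sq.
  pose proof (csum_cauchy_schwarz F G). pose proof (Rle_abs (csum (fun i => F i * G i))). nra.
Qed.

Lemma pdist_sym x y : pdist x y = pdist y x.
Proof. rewrite !pdist_cnorm. unfold cnorm; f_equal; apply csum_ext; intros; ring. Qed.

Lemma pdist_triangle x y w : pdist x w <= pdist x y + pdist y w.
Proof.
  rewrite !pdist_cnorm. eapply Rle_trans; [|apply cnorm_triangle].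
  right; apply cnorm_ext; intros; ring.
Qed.

Lemma pdist_nonneg x y : 0 <= pdist x y.
Proof. rewrite pdist_cnorm; apply cnorm_nonneg. Qed.

Lemma pdist_refl x : pdist x x = 0.
Proof.
  rewrite pdist_cnorm. unfold cnorm.
  rewrite (csum_ext _ (fun i => 0 * 0)), csum_scal, Rmult_0_l; [apply sqrt_0|]. intros; simpl; ring.
Qed.

Lemma coord_dist_le x y i : Rabs (coord x i - coord y i) <= pdist x y.
Proof. apply (coord_le_cnorm (fun i => coord x i - coord y i)). Qed.

Lemma pdist_eq0 x y : pdist x y = 0 -> x = y.
Proof.
  intros H. destruct x as [a b], y as [c e].
  assert (E : forall i, coord (a, b) i = coord (c, e) i).
  { intros i. pose proof (coord_dist_le (a, b) (c, e) i). rewrite H in H0.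
    pose proof (Rabs_pos (coord (a, b) i - coord (c, e) i)).
    destruct (Req_dec (coord (a, b) i) (coord (c, e) i)) as [|N]; auto.
    pose proof (Rabs_pos_lt (coord (a, b) i - coord (c, e) i) ltac:(lra)). lra. }
  f_equal; apply functional_extensionality; intros r; apply functional_extensionality; intros j;
    [apply (E (inl (r, j)))|apply (E (inr (r, j)))].
Qed.

Lemma pdist_pzero x : pdist x pzero = pnorm x.
Proof. rewrite pdist_cnorm, pnorm_cnorm. apply cnorm_ext. intros [[r t]|[r t]]; simpl; ring. Qed.

Lemma vdist_fst_le x y r : vdist (fst x r) (fst y r) <= pdist x y.
Proof.
  apply sqrt_le_1; [apply fsum_nonneg; intros; nra|apply (csum_sq_nonneg (fun i => coord x i - coord y i))|].
  set (D := psub x y). unfold pdot, vnorm2.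
  pose proof (fsum_nonneg Rb (fun r => vdot (snd D r) (snd D r)) (fun r => fsum_nonneg _ _ (fun j => Rle_0_sqr _))).
  pose proof (fsum_term_le Rb (fun r => vdot (fst D r) (fst D r)) r (fun r => fsum_nonneg _ _ (fun j => Rle_0_sqr _))).
  simpl in *. lra.
Qed.

Lemma vdist_snd_le x y r : vdist (snd x r) (snd y r) <= pdist x y.
Proof.
  apply sqrt_le_1; [apply fsum_nonneg; intros; nra|apply (csum_sq_nonneg (fun i => coord x i - coord y i))|].
  set (D := psub x y). unfold pdot, vnorm2.
  pose proof (fsum_nonneg Rb (fun r => vdot (fst D r) (fst D r)) (fun r => fsum_nonneg _ _ (fun j => Rle_0_sqr _))).
  pose proof (fsum_term_le Rb (fun r => vdot (snd D r) (snd D r)) r (fun r => fsum_nonneg _ _ (fun j => Rle_0_sqr _))).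
  simpl in *. lra.
Qed.

End Coordinates.

Lemma pdist_no_blocks {n1 n2} (x y : pt 0 n1 n2) : pdist x y = 0.
Proof. unfold pdist, pnorm, pdot. simpl. rewrite Rplus_0_r. apply sqrt_0. Qed.

(** * Extended reals *)

Lemma eplus_some_inv (a b : ereal) s :
  eplus a b = Some s -> exists x y, a = Some x /\ b = Some y /\ s = x + y.
Proof. destruct a as [x|], b as [y|]; simpl; intros H; try discriminate. inversion H; eauto. Qed.

Lemma efsum_some_inv n (F : Fin.t n -> ereal) s :
  efsum n F = Some s -> exists b : Fin.t n -> R, (forall j, F j = Some (b j)) /\ s = fsum n b.
Proof.
  revert F s; induction n as [|n IH]; simpl; intros F s H.
  - exists (fun _ => 0). split; [intros j; apply (Fin.case0 (fun _ => _) j)|]. now inversion H.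
  - apply eplus_some_inv in H as [x [y [H1 [H2 ->]]]].
    destruct (IH _ _ H2) as [b [Hb ->]].
    exists (fun j => match F j with Some x => x | None => 0 end). split.
    + intros j; pattern j; apply Fin.caseS'; [now rewrite H1|].
      intros p; now rewrite Hb.
    + simpl. rewrite H1. f_equal. apply fsum_ext. intros i; now rewrite Hb.
Qed.

Lemma efsum_some n (F : Fin.t n -> ereal) b :
  (forall j, F j = Some (b j)) -> efsum n F = Some (fsum n b).
Proof.
  revert F b; induction n as [|n IH]; simpl; intros F b H; [reflexivity|].
  now rewrite H, (IH (fun i => F (Fin.FS i)) (fun i => b (Fin.FS i))).
Qed.

Lemma efsum_none n (F : Fin.t n -> ereal) r : F r = None -> efsum n F = None.
Proof.
  induction n as [|n IH]; [apply (Fin.case0 (fun _ => _) r)|].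
  pattern r; apply Fin.caseS'; simpl.
  - now intros ->.
  - intros p H. rewrite (IH (fun i => F (Fin.FS i)) p H). now destruct (F Fin.F1).
Qed.

Lemma efsum_replace n (F F' : Fin.t n -> ereal) r s a :
  efsum n F = Some s -> F r = Some a -> (forall j, idx j <> idx r -> F' j = F j) ->
  efsum n F' = eplus (F' r) (Some (s - a)).
Proof.
  intros Hs Ha Hj. destruct (efsum_some_inv _ _ _ Hs) as [b [Hb ->]].
  destruct (F' r) as [c|] eqn:Ec; [|now rewrite (efsum_none _ _ r Ec)].
  set (b' := fun j => if Nat.eqb (idx j) (idx r) then c else b j).
  rewrite (efsum_some _ _ b').
  - simpl. f_equal.
    assert (E : fsum n (fun j => b' j - b j) = c - a).
    { rewrite (fsum_single _ _ r); unfold b'; rewrite ?Nat.eqb_refl.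
      - rewrite Hb in Ha. now inversion Ha.
      - intros j Hj'. apply Nat.eqb_neq in Hj'. rewrite Hj'. ring. }
    rewrite fsum_sub in E. lra.
  - intros j. unfold b'. destruct (Nat.eqb_spec (idx j) (idx r)) as [E|E].
    + apply idx_inj in E; now subst.
    + now rewrite Hj.
Qed.

Lemma ege_plus a b x y : ege a x -> ege b y -> ege (eplus a b) (x + y).
Proof. unfold ege, ele. destruct a, b; simpl; auto; intros; lra. Qed.

Lemma ege_weaken a x y : ege a x -> y <= x -> ege a y.
Proof. unfold ege, ele. destruct a; auto; intros; lra. Qed.

Lemma efsum_ge n (F : Fin.t n -> ereal) b :
  (forall j, ege (F j) (b j)) -> ege (efsum n F) (fsum n b).
Proof.
  revert F b; induction n as [|n IH]; simpl; intros F b H; [unfold ege, ele; lra|].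
  apply ege_plus; auto.
Qed.

Definition liminf_ge (A : nat -> ereal) (a : ereal) : Prop :=
  forall c, egt a c -> exists N, forall k, (N <= k)%nat -> egt (A k) c.
Definition limsup_le (A : nat -> ereal) (a : R) : Prop :=
  forall eps, 0 < eps -> exists N, forall k, (N <= k)%nat -> ele (A k) (Some (a + eps)).

Lemma liminf_ge_plus A B a b :
  liminf_ge A a -> liminf_ge B b -> liminf_ge (fun k => eplus (A k) (B k)) (eplus a b).
Proof.
  intros HA HB c Hc.
  assert (Split : exists c1 c2, c1 + c2 = c /\ egt a c1 /\ egt b c2).
  { destruct a as [x|], b as [y|]; simpl in *.
    - exists (x - (x + y - c) / 2), (y - (x + y - c) / 2). repeat split; lra.
    - exists (x - 1), (c - x + 1). repeat split; lra.
    - exists (c - y + 1), (y - 1). repeat split; lra.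
    - exists c, 0. repeat split; lra. }
  destruct Split as [c1 [c2 [<- [H1 H2]]]].
  destruct (HA _ H1) as [N1 HN1], (HB _ H2) as [N2 HN2].
  exists (N1 + N2)%nat. intros k Hk.
  specialize (HN1 k ltac:(lia)); specialize (HN2 k ltac:(lia)).
  destruct (A k), (B k); simpl in *; auto; lra.
Qed.

Lemma liminf_ge_efsum n (F : nat -> Fin.t n -> ereal) G :
  (forall j, liminf_ge (fun k => F k j) (G j)) -> liminf_ge (fun k => efsum n (F k)) (efsum n G).
Proof.
  revert F G; induction n as [|n IH]; intros F G H; simpl.
  - intros c Hc. exists 0%nat. auto.
  - apply liminf_ge_plus; [apply H|]. apply (IH (fun k i => F k (Fin.FS i))). intros; apply H.
Qed.

Lemma liminf_ge_cv u x : Un_cv u x -> liminf_ge (fun k => Some (u k)) (Some x).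
Proof.
  intros H c Hc. simpl in Hc. destruct (H (x - c) ltac:(lra)) as [N HN].
  exists N. intros k Hk. specialize (HN k Hk). unfold R_dist in HN. apply Rabs_def2 in HN. simpl; lra.
Qed.

Lemma limsup_le_plus A B a b :
  limsup_le A a -> limsup_le B b -> limsup_le (fun k => eplus (A k) (B k)) (a + b).
Proof.
  intros HA HB eps He.
  destruct (HA (eps / 2) ltac:(lra)) as [N1 HN1], (HB (eps / 2) ltac:(lra)) as [N2 HN2].
  exists (N1 + N2)%nat. intros k Hk.
  specialize (HN1 k ltac:(lia)); specialize (HN2 k ltac:(lia)).
  destruct (A k), (B k); simpl in *; auto; lra.
Qed.

Lemma limsup_le_efsum n (F : nat -> Fin.t n -> ereal) a :
  (forall j, limsup_le (fun k => F k j) (a j)) -> limsup_le (fun k => efsum n (F k)) (fsum n a).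
Proof.
  revert F a; induction n as [|n IH]; intros F a H; simpl.
  - intros eps He. exists 0%nat. intros; simpl; lra.
  - apply limsup_le_plus; [apply H|]. apply (IH (fun k i => F k (Fin.FS i))). intros; apply H.
Qed.

Lemma limsup_le_cv u x : Un_cv u x -> limsup_le (fun k => Some (u k)) x.
Proof.
  intros H eps He. destruct (H eps He) as [N HN]. exists N. intros k Hk.
  specialize (HN k Hk). unfold R_dist in HN. apply Rabs_def2 in HN. simpl; lra.
Qed.

Lemma cv_of_liminf_limsup (u : nat -> R) x :
  liminf_ge (fun k => Some (u k)) (Some x) -> limsup_le (fun k => Some (u k)) x -> Un_cv u x.
Proof.
  intros Hi Hs eps He.
  destruct (Hi (x - eps) ltac:(simpl; lra)) as [N1 H1], (Hs (eps / 2) ltac:(lra)) as [N2 H2].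
  exists (N1 + N2)%nat. intros k Hk.
  specialize (H1 k ltac:(lia)); specialize (H2 k ltac:(lia)). simpl in H1, H2.
  unfold R_dist. apply Rabs_def1; lra.
Qed.

(** * Real sequences and the KL recurrence *)

Lemma Rabs_le_inv x y : Rabs x <= y -> - y <= x <= y.
Proof. pose proof (Rle_abs x); pose proof (Rle_abs (- x)). rewrite Rabs_Ropp in *. lra. Qed.

Lemma cv0_squeeze a b : (forall k, 0 <= a k <= b k) -> Un_cv b 0 -> Un_cv a 0.
Proof.
  intros H Hb eps He. destruct (Hb eps He) as [N HN]. exists N. intros k Hk.
  specialize (HN k Hk). specialize (H k). unfold R_dist in *. rewrite Rminus_0_r in *.
  rewrite Rabs_right in * by lra. lra.
Qed.

Lemma cv0_sqrt u : (forall k, 0 <= u k) -> Un_cv u 0 -> Un_cv (fun k => sqrt (u k)) 0.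
Proof.
  intros Hp H eps He. destruct (H (eps * eps) ltac:(nra)) as [N HN]. exists N. intros k Hk.
  specialize (HN k Hk). specialize (Hp k). unfold R_dist in *. rewrite Rminus_0_r in *.
  rewrite Rabs_right in HN by lra. rewrite Rabs_right by (apply Rle_ge, sqrt_pos).
  rewrite <- (sqrt_square eps) by lra. apply sqrt_lt_1; nra.
Qed.

Lemma cv_shift1 u x : Un_cv u x -> Un_cv (fun k => u (S k)) x.
Proof. intros H eps He. destruct (H eps He) as [N HN]. exists N. intros; apply HN; lia. Qed.

Lemma cv_unshift1 u x : Un_cv (fun k => u (S k)) x -> Un_cv u x.
Proof.
  intros H eps He. destruct (H eps He) as [N HN]. exists (S N). intros k Hk.
  destruct k as [|k]; [lia|]. apply HN; lia.
Qed.

Lemma series_cv_of_bounded a B :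
  (forall k, 0 <= a k) -> (forall n, sum_f_R0 a n <= B) ->
  exists s, Un_cv (fun n => sum_f_R0 a n) s /\ s <= B.
Proof.
  intros Ha Hb. destruct (growing_cv (fun n => sum_f_R0 a n)) as [s Hs].
  - intros n. rewrite tech5. specialize (Ha (S n)). lra.
  - exists B. intros x [i ->]. apply Hb.
  - exists s; split; auto. destruct (Rle_dec s B) as [|N]; auto.
    destruct (Hs (s - B) ltac:(lra)) as [n Hn]. specialize (Hn n (le_n _)).
    unfold R_dist in Hn. apply Rabs_def2 in Hn. specialize (Hb n). lra.
Qed.

Lemma concave_le_tangent (phi dphi : R -> R) (eta : ereal) s t :
  (forall s t a, 0 <= s -> below eta s -> 0 <= t -> below eta t -> 0 <= a <= 1 ->
      a * phi s + (1 - a) * phi t <= phi (a * s + (1 - a) * t)) ->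
  derivable_pt_lim phi s (dphi s) ->
  0 <= s -> below eta s -> 0 <= t -> below eta t ->
  phi t <= phi s + dphi s * (t - s).
Proof.
  intros Hc Hd Hs Hes Ht Het.
  destruct (Req_dec t s) as [->|E]; [lra|].
  assert (Hts : 0 < Rabs (t - s)) by (apply Rabs_pos_lt; lra).
  enough (G : forall eps, 0 < eps -> phi t - phi s <= dphi s * (t - s) + eps * Rabs (t - s)).
  { destruct (Rle_dec (phi t) (phi s + dphi s * (t - s))) as [|N]; auto.
    specialize (G ((phi t - phi s - dphi s * (t - s)) / (2 * Rabs (t - s)))
                  ltac:(apply Rdiv_lt_0_compat; lra)).
    replace (_ / (2 * Rabs (t - s)) * Rabs (t - s)) with ((phi t - phi s - dphi s * (t - s)) / 2) in G
      by (field; lra). lra. }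
  intros eps He. destruct (Hd eps He) as [[del Hdel] Hh]. simpl in Hh.
  (* the secant from [s] to [s + a (t - s)], with [a] small, is close to the tangent *)
  set (a := Rmin 1 (del / (2 * Rabs (t - s)))).
  assert (Ha0 : 0 < a) by (apply Rmin_pos; [lra|apply Rdiv_lt_0_compat; lra]).
  assert (Ha1 : a <= 1) by apply Rmin_l.
  assert (Ha2 : a * Rabs (t - s) <= del / 2).
  { pose proof (Rmult_le_compat_r (Rabs (t - s)) _ _ (Rlt_le _ _ Hts) (Rmin_r 1 (del / (2 * Rabs (t - s))))).
    replace (del / (2 * Rabs (t - s)) * Rabs (t - s)) with (del / 2) in H by (field; lra). exact H. }
  set (h := a * (t - s)).
  assert (Hh0 : h <> 0) by (unfold h; intros Z; apply Rmult_integral in Z; lra).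
  assert (Hhd : Rabs h < del) by (unfold h; rewrite Rabs_mult, (Rabs_right a) by lra; lra).
  specialize (Hh h Hh0 Hhd).
  specialize (Hc t s a Ht Het Hs Hes (conj (Rlt_le _ _ Ha0) Ha1)).
  replace (a * t + (1 - a) * s) with (s + h) in Hc by (unfold h; ring).
  set (q := (phi (s + h) - phi s) / h) in Hh.
  assert (Eq : phi (s + h) - phi s = q * h) by (unfold q; field; auto).
  assert (Hq : q * (t - s) <= dphi s * (t - s) + eps * Rabs (t - s)).
  { apply Rabs_def2 in Hh. destruct (Rle_dec 0 (t - s)).
    - rewrite Rabs_right by lra. nra.
    - rewrite Rabs_left by lra. nra. }
  assert (Hsec : a * (phi t - phi s) <= a * (q * (t - s))).
  { replace (a * (q * (t - s))) with (q * h) by (unfold h; ring). lra. }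
  apply Rmult_le_reg_l in Hsec; auto. lra.
Qed.

(** The one-step estimate of the KL argument: [X] is the decrease of the
    desingularising function, [Dp] its slope, [d1^2 <= 2 rp (a - a')] the
    sufficient decrease and [1 <= Dp (K d0)] the KL inequality. *)
Lemma kl_step_estimate Dp X a a' d0 d1 rp K :
  0 < Dp -> 0 < rp -> 0 <= d0 -> 0 <= d1 ->
  Dp * (a - a') <= X -> d1 * d1 <= 2 * rp * (a - a') -> 1 <= Dp * (K * d0) ->
  2 * d1 <= 2 * rp * K * X + d0.
Proof.
  intros HD Hrp H0 H1 Htan Hdec HKL.
  assert (HX : 0 <= X) by nra.
  set (Y := 2 * rp * K * X).
  assert (Hd1 : d1 * d1 <= Y * d0).
  { apply (Rmult_le_reg_r Dp); auto. unfold Y.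
    assert (2 * rp * X * 1 <= 2 * rp * X * (Dp * (K * d0))) by (apply Rmult_le_compat_l; [nra|auto]).
    nra. }
  assert (HK : 0 < K).
  { destruct (Rle_dec K 0) as [N|]; [|lra].
    pose proof (Rmult_le_pos (- K) d0 ltac:(lra) H0). nra. }
  assert (HY : 0 <= Y) by (unfold Y; pose proof (Rmult_le_pos _ _ (Rlt_le _ _ Hrp) HX); nra).
  apply Rsqr_incr_0_var; [|lra]. unfold Rsqr. pose proof (pow2_ge_0 (Y - d0)). nra.
Qed.

Section KLRecurrence.
Variables (d ph : nat -> R) (M : R).
Hypothesis d_nonneg : forall k, 0 <= d k.
Hypothesis ph_nonneg : forall k, 0 <= ph k.
Hypothesis ph_decr : forall k, ph (S k) <= ph k.
Hypothesis M_nonneg : 0 <= M.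

Definition kl_recurrence_at (k : nat) : Prop :=
  2 * d (S k) <= M * (ph (S k) - ph (S (S k))) + d k.

Lemma kl_recurrence_telescope k n :
  (forall j, (j <= n)%nat -> kl_recurrence_at (k + j)) ->
  sum_f_R0 (fun j => d (k + 1 + j)%nat) n + d (k + 1 + n)%nat
  <= M * (ph (k + 1)%nat - ph (k + 2 + n)%nat) + d k.
Proof.
  induction n as [|n IH]; intros H.
  - specialize (H 0%nat (le_n _)). unfold kl_recurrence_at in H. simpl.
    replace (k + 0)%nat with k in H by lia.
    replace (k + 1 + 0)%nat with (S k) by lia. replace (k + 2 + 0)%nat with (S (S k)) by lia.
    replace (k + 1)%nat with (S k) by lia. lra.
  - rewrite tech5. specialize (IH (fun j Hj => H j ltac:(lia))).
    specialize (H (S n) (le_n _)). unfold kl_recurrence_at in H.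
    replace (k + 1 + S n)%nat with (S (S (k + n))) in * by lia.
    replace (k + S n)%nat with (S (k + n)) in H by lia.
    replace (k + 2 + S n)%nat with (S (S (S (k + n)))) by lia.
    replace (k + 1 + n)%nat with (S (k + n)) in IH by lia.
    replace (k + 2 + n)%nat with (S (S (k + n))) in IH by lia. lra.
Qed.

Lemma kl_recurrence_tail k n :
  (forall j, kl_recurrence_at (k + j)) ->
  sum_f_R0 (fun j => d (k + 1 + j)%nat) n <= M * ph k + d k.
Proof.
  intros H. pose proof (kl_recurrence_telescope k n (fun j _ => H j)).
  pose proof (d_nonneg (k + 1 + n)). pose proof (ph_nonneg (k + 2 + n)).
  replace (k + 1)%nat with (S k) in * by lia. pose proof (ph_decr k).
  assert (M * (ph (S k) - ph (k + 2 + n)%nat) <= M * ph k) by (apply Rmult_le_compat_l; lra). lra.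
Qed.

Lemma kl_recurrence_trapped (D : nat -> R) (rho e0 : R) :
  (forall k, D (S k) <= D k + d k) -> d 0%nat <= e0 ->
  (forall k, D k < rho -> D (S k) < rho -> kl_recurrence_at k) ->
  M * ph 0%nat + 2 * e0 + D 0%nat < rho ->
  forall k, D k < rho.
Proof.
  intros Hstep Hd0 Hrec Hsmall.
  assert (Hchain : forall n, D (S n) <= D 0%nat + sum_f_R0 d n).
  { induction n; simpl; [apply Hstep|]. pose proof (Hstep (S n)). lra. }
  assert (Hall : forall N j, (j <= N)%nat -> D j < rho).
  { induction N as [|N IH]; intros j Hj.
    - replace j with 0%nat by lia. pose proof (ph_nonneg 0). pose proof (d_nonneg 0).
      assert (0 <= M * ph 0%nat) by (apply Rmult_le_pos; lra). lra.
    - destruct (Nat.eq_dec j (S N)) as [->|]; [|apply IH; lia].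
      pose proof (Hchain N) as Hc. destruct N as [|N].
      + simpl in Hc. pose proof (IH 0%nat (le_n _)). pose proof (ph_nonneg 0).
        assert (0 <= M * ph 0%nat) by (apply Rmult_le_pos; lra). lra.
      + rewrite (decomp_sum d (S N)) in Hc by lia. simpl pred in Hc.
        pose proof (kl_recurrence_telescope 0 N (fun j Hj => Hrec (0 + j)%nat (IH (0 + j)%nat ltac:(lia)) (IH (S (0 + j)) ltac:(lia)))) as T.
        simpl in T. pose proof (d_nonneg (S N)). pose proof (ph_nonneg (S (S N))). pose proof (ph_decr 0).
        assert (M * (ph 1%nat - ph (S (S N))) <= M * ph 0%nat) by (apply Rmult_le_compat_l; lra).
        lra. }
  intros k. now apply (Hall k).
Qed.

End KLRecurrence.

(** * Blocks and sweeps *)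

Ltac idx_cases := repeat match goal with
  | |- context [Nat.ltb ?a ?b] => destruct (Nat.ltb_spec a b)
  | |- context [Nat.eqb ?a ?b] => destruct (Nat.eqb_spec a b)
  | |- context [Nat.leb ?a ?b] => destruct (Nat.leb_spec a b)
  end.

Section Blocks.
Context {Rb n1 n2 : nat}.
Implicit Types (zo zn x p : pt Rb n1 n2) (r : Fin.t Rb).

Lemma vdot_vsub_diag n (a b : vec n) : vdot a (vsub b b) = 0.
Proof.
  unfold vdot, vsub. rewrite (fsum_ext _ _ (fun _ => 0)), fsum_const by (intros; ring). ring.
Qed.

Lemma mix_u_pdot zo zn p r u u' :
  pdot p (psub (mix_u zo zn r u) (mix_u zo zn r u')) = vdot (fst p r) (vsub u u').
Proof.
  unfold pdot; simpl.
  rewrite (fsum_ext _ (fun j => vdot (snd p j) _) (fun _ => 0)) by (intros; apply vdot_vsub_diag).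
  rewrite fsum_const, Rmult_0_r, Rplus_0_r, (fsum_single _ _ r).
  - now rewrite Nat.ltb_irrefl, Nat.eqb_refl.
  - intros j Hj. apply Nat.eqb_neq in Hj. rewrite Hj. apply vdot_vsub_diag.
Qed.

Lemma mix_v_pdot zo zn p r v v' :
  pdot p (psub (mix_v zo zn r v) (mix_v zo zn r v')) = vdot (snd p r) (vsub v v').
Proof.
  unfold pdot; simpl.
  rewrite (fsum_ext _ (fun j => vdot (fst p j) _) (fun _ => 0)) by (intros; apply vdot_vsub_diag).
  rewrite fsum_const, Rmult_0_r, Rplus_0_l, (fsum_single _ _ r).
  - now rewrite Nat.ltb_irrefl, Nat.eqb_refl.
  - intros j Hj. apply Nat.eqb_neq in Hj. rewrite Hj. apply vdot_vsub_diag.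
Qed.

Lemma mix_u_pdist zo zn r u u' : pdist (mix_u zo zn r u) (mix_u zo zn r u') = vdist u u'.
Proof. unfold pdist, pnorm, vdist. rewrite mix_u_pdot. simpl. now rewrite Nat.ltb_irrefl, Nat.eqb_refl. Qed.

Lemma mix_v_pdist zo zn r v v' : pdist (mix_v zo zn r v) (mix_v zo zn r v') = vdist v v'.
Proof. unfold pdist, pnorm, vdist. rewrite mix_v_pdot. simpl. now rewrite Nat.ltb_irrefl, Nat.eqb_refl. Qed.

(** The point reached after the first [m] of the [2 Rb] block updates of a
    sweep from [zo] to [zn] (blocks ordered [u^1, v^1, u^2, v^2, ...]). *)
Definition partial_sweep zo zn (m : nat) : pt Rb n1 n2 :=
  (fun j => if Nat.ltb (2 * idx j) m then fst zn j else fst zo j,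
   fun j => if Nat.ltb (2 * idx j + 1) m then snd zn j else snd zo j).

Lemma partial_sweep_0 zo zn : partial_sweep zo zn 0 = zo.
Proof.
  destruct zo. unfold partial_sweep; simpl.
  f_equal; apply functional_extensionality; intros j; idx_cases; auto; lia.
Qed.

Lemma partial_sweep_full zo zn : partial_sweep zo zn (2 * Rb) = zn.
Proof.
  destruct zn. unfold partial_sweep; simpl.
  f_equal; apply functional_extensionality; intros j; pose proof (idx_lt _ j); idx_cases; auto; lia.
Qed.

Ltac partial_sweep_ext :=
  unfold partial_sweep, mix_u, mix_v;
  f_equal; apply functional_extensionality; intros j; idx_cases; auto; try lia;
  match goal with E : idx _ = idx _ |- _ => apply idx_inj in E; now subst end.

Lemma mix_u_old zo zn r : mix_u zo zn r (fst zo r) = partial_sweep zo zn (2 * idx r).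
Proof. partial_sweep_ext. Qed.
Lemma mix_u_new zo zn r : mix_u zo zn r (fst zn r) = partial_sweep zo zn (2 * idx r + 1).
Proof. partial_sweep_ext. Qed.
Lemma mix_v_old zo zn r : mix_v zo zn r (snd zo r) = partial_sweep zo zn (2 * idx r + 1).
Proof. partial_sweep_ext. Qed.
Lemma mix_v_new zo zn r : mix_v zo zn r (snd zn r) = partial_sweep zo zn (2 * idx r + 2).
Proof. partial_sweep_ext. Qed.

Definition coords_from (a b x m : pt Rb n1 n2) : Prop :=
  forall i, coord m i = coord a i \/ coord m i = coord b i \/ coord m i = coord x i.

Lemma pdist_sq_le_coords_from a b x m :
  coords_from a b x m -> pdist m x * pdist m x <= pdist a x * pdist a x + pdist b x * pdist b x.
Proof.
  intros H. rewrite !pdist_cnorm, !cnorm_sq, <- csum_add. apply csum_le. intros i.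
  cbv beta. pose proof (Rle_0_sqr (coord a i - coord x i)); pose proof (Rle_0_sqr (coord b i - coord x i)).
  unfold Rsqr in *. destruct (H i) as [E|[E|E]]; rewrite E; lra.
Qed.

Lemma mix_u_coords_from zo zn x r u :
  u = fst zn r \/ u = fst x r -> coords_from zo zn x (mix_u zo zn r u).
Proof.
  intros Hu [[j t]|[j t]]; simpl; idx_cases; auto.
  apply idx_inj in e; subst j. destruct Hu as [->| ->]; auto.
Qed.

Lemma mix_v_coords_from zo zn x r v :
  v = snd zn r \/ v = snd x r -> coords_from zo zn x (mix_v zo zn r v).
Proof.
  intros Hv [[j t]|[j t]]; simpl; idx_cases; auto.
  apply idx_inj in e; subst j. destruct Hv as [->| ->]; auto.
Qed.

End Blocks.

Lemma vdist_sq n (a b : vec n) : vdist a b * vdist a b = vnorm2 (vsub a b).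
Proof. apply sqrt_sqrt. apply fsum_nonneg; intros; apply Rle_0_sqr. Qed.

Lemma vdist_nonneg n (a b : vec n) : 0 <= vdist a b.
Proof. apply sqrt_pos. Qed.

Lemma vnorm2_nonneg n (a : vec n) : 0 <= vnorm2 a.
Proof. apply fsum_nonneg; intros; apply Rle_0_sqr. Qed.

Lemma vnorm2_vsub_diag n (a : vec n) : vnorm2 (vsub a a) = 0.
Proof. apply vdot_vsub_diag. Qed.

Lemma argmin_prox_decrease {n} (h : vec n -> ereal) c uo us v0 :
  h uo = Some v0 -> is_argmin (fun u => eplus (h u) (Some (c * vnorm2 (vsub u uo)))) us ->
  exists v1, h us = Some v1 /\ v1 + c * vnorm2 (vsub us uo) <= v0.
Proof.
  intros H0 Hmin. specialize (Hmin uo). simpl in Hmin.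
  rewrite H0, vnorm2_vsub_diag in Hmin.
  destruct (h us) as [v1|]; simpl in Hmin; [|contradiction]. exists v1. split; auto. lra.
Qed.

Section SufficientDecrease.
Context {Rb n1 n2 : nat}.
Variable L : pt Rb n1 n2 -> ereal.

(** [PAM_seq L lam mu z] unfolds to [forall k, pam_sweep (z k) (z (S k)) (lam k) (mu k)]. *)
Definition pam_sweep (zo zn : pt Rb n1 n2) (lk mk : Fin.t Rb -> R) : Prop :=
  forall r,
    is_argmin (fun u => eplus (L (mix_u zo zn r u)) (Some (/ (2 * lk r) * vnorm2 (vsub u (fst zo r)))))
              (fst zn r) /\
    is_argmin (fun v => eplus (L (mix_v zo zn r v)) (Some (/ (2 * mk r) * vnorm2 (vsub v (snd zo r)))))
              (snd zn r).

Definition block_sq_dist (zo zn : pt Rb n1 n2) (r : Fin.t Rb) : R :=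
  vnorm2 (vsub (fst zn r) (fst zo r)) + vnorm2 (vsub (snd zn r) (snd zo r)).

Lemma pdist_sq_block_sum zo zn : pdist zn zo * pdist zn zo = fsum Rb (block_sq_dist zo zn).
Proof.
  unfold pdist, pnorm. rewrite sqrt_sqrt; [symmetry; apply fsum_add|].
  apply (csum_sq_nonneg (fun i => coord zn i - coord zo i)).
Qed.

Variables (zo zn : pt Rb n1 n2) (lk mk : Fin.t Rb -> R) (rp lo : R).
Hypothesis sweep : pam_sweep zo zn lk mk.
Hypothesis lk_bounds : forall r, 0 < lk r <= rp.
Hypothesis mk_bounds : forall r, 0 < mk r <= rp.
Hypothesis L_zo : L zo = Some lo.

Lemma partial_sweep_decrease i : (i <= Rb)%nat ->
  exists v, L (partial_sweep zo zn (2 * i)) = Some v /\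
            v + / (2 * rp) * fsum_below Rb (block_sq_dist zo zn) i <= lo.
Proof.
  induction i as [|i IH]; intros Hi.
  - exists lo. rewrite Nat.mul_0_r, partial_sweep_0, fsum_below_0. split; auto. lra.
  - destruct (IH ltac:(lia)) as [v [Hv Hle]].
    assert (Hlt : (i < Rb)%nat) by lia. set (r := Fin.of_nat_lt Hlt).
    assert (Er : idx r = i) by apply idx_of_nat.
    destruct (sweep r) as [Au Av].
    rewrite <- Er, <- mix_u_old in Hv.
    destruct (argmin_prox_decrease _ _ _ _ _ Hv Au) as [v1 [E1 L1]].
    rewrite mix_u_new, <- mix_v_old in E1.
    destruct (argmin_prox_decrease _ _ _ _ _ E1 Av) as [v2 [E2 L2]].
    rewrite mix_v_new in E2. exists v2.
    replace (2 * S i)%nat with (2 * idx r + 2)%nat by lia. split; auto.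
    rewrite (fsum_below_S _ _ i Hlt). fold r. unfold block_sq_dist in *.
    specialize (lk_bounds r); specialize (mk_bounds r).
    assert (/ (2 * rp) * vnorm2 (vsub (fst zn r) (fst zo r))
            <= / (2 * lk r) * vnorm2 (vsub (fst zn r) (fst zo r)))
      by (apply Rmult_le_compat_r; [apply vnorm2_nonneg|apply Rinv_le_contravar; lra]).
    assert (/ (2 * rp) * vnorm2 (vsub (snd zn r) (snd zo r))
            <= / (2 * mk r) * vnorm2 (vsub (snd zn r) (snd zo r)))
      by (apply Rmult_le_compat_r; [apply vnorm2_nonneg|apply Rinv_le_contravar; lra]).
    lra.
Qed.

Lemma sweep_sufficient_decrease ln :
  L zn = Some ln -> ln + / (2 * rp) * (pdist zn zo * pdist zn zo) <= lo.
Proof.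
  intros Hn. destruct (partial_sweep_decrease Rb (le_n _)) as [v [Hv Hle]].
  rewrite partial_sweep_full, Hn in Hv. injection Hv as <-.
  now rewrite fsum_below_full, <- pdist_sq_block_sum in Hle.
Qed.

Lemma sweep_intermediate_finite r :
  (exists v, L (mix_u zo zn r (fst zn r)) = Some v) /\
  (exists v, L (mix_v zo zn r (snd zn r)) = Some v).
Proof.
  destruct (partial_sweep_decrease (idx r) (Nat.lt_le_incl _ _ (idx_lt _ r))) as [v [Hv _]].
  destruct (sweep r) as [Au Av].
  rewrite <- mix_u_old in Hv.
  destruct (argmin_prox_decrease _ _ _ _ _ Hv Au) as [v1 [E1 _]].
  split; [eauto|].
  rewrite mix_u_new, <- mix_v_old in E1.
  destruct (argmin_prox_decrease _ _ _ _ _ E1 Av) as [v2 [E2 _]]. eauto.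
Qed.

End SufficientDecrease.

(** * Subgradients produced by a sweep *)

Definition prox_optimal {n} (h : vec n -> ereal) (q : vec n -> R) (lv : R) (uo us : vec n) : Prop :=
  exists a, h us = Some a /\
    forall u b, h u = Some b ->
      a + q us + / (2 * lv) * vnorm2 (vsub us uo) <= b + q u + / (2 * lv) * vnorm2 (vsub u uo).

Lemma prox_optimal_of_argmin {n} (H h : vec n -> ereal) (q : vec n -> R) c lv uo us :
  (forall u, H u = eplus (h u) (Some (c + q u))) -> (exists v, H us = Some v) ->
  is_argmin (fun u => eplus (H u) (Some (/ (2 * lv) * vnorm2 (vsub u uo)))) us ->
  prox_optimal h q lv uo us.
Proof.
  intros EH [v Hv] Hmin. rewrite EH in Hv.
  apply eplus_some_inv in Hv as [a [y [Ha [Hy _]]]]. injection Hy as <-.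
  exists a. split; auto. intros u b Hb.
  specialize (Hmin u). simpl in Hmin. rewrite !EH, Ha, Hb in Hmin. simpl in Hmin. lra.
Qed.

Lemma vdot_add_l n (a b c : vec n) : vdot (fun i => a i + b i) c = vdot a c + vdot b c.
Proof. unfold vdot. rewrite <- fsum_add. apply fsum_ext; intros; ring. Qed.

Definition vfrechet_sub {n} (h : vec n -> ereal) (x s : vec n) : Prop :=
  exists hx, h x = Some hx /\ forall eps, 0 < eps -> exists delta, 0 < delta /\
    forall y, vdist y x < delta -> ege (h y) (hx + vdot s (vsub y x) - eps * vdist y x).

Lemma efsum_vfrechet {n m} (h : Fin.t n -> vec m -> ereal) (x s : Fin.t n -> vec m) :
  (forall r, vfrechet_sub (h r) (x r) (s r)) ->
  exists hx : Fin.t n -> R, (forall r, h r (x r) = Some (hx r)) /\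
    forall eps, 0 < eps -> exists delta, 0 < delta /\
      forall y : Fin.t n -> vec m, (forall r, vdist (y r) (x r) < delta) ->
      ege (efsum n (fun r => h r (y r)))
          (fsum n (fun r => hx r + vdot (s r) (vsub (y r) (x r)) - eps * vdist (y r) (x r))).
Proof.
  intros H.
  exists (fun r => match h r (x r) with Some a => a | None => 0 end).
  assert (E : forall r, h r (x r) = Some (match h r (x r) with Some a => a | None => 0 end))
    by (intros r; now destruct (H r) as [a [-> _]]).
  split; auto. intros eps He.
  destruct (fin_uniform_delta n (fun r t => forall u, vdist u (x r) = t ->
     ege (h r u) (match h r (x r) with Some a => a | None => 0 end + vdot (s r) (vsub u (x r)) - eps * t)))
    as [d [Hd Hu]].
  { intros r. destruct (H r) as [a [Ea Ha]]. destruct (Ha eps He) as [d [Hd Hr]].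
    exists d. split; auto. intros t Ht u <-. rewrite Ea. now apply Hr. }
  exists d. split; auto. intros y Hy. apply efsum_ge. intros r. now apply (Hu r _ (Hy r)).
Qed.

(** Fermat's rule for the block subproblems gives [(zo - zn)/lk - grad Q(intermediate point)]
    in the subdifferential of [f_r]; adding [grad Q zn] turns it into a subgradient of [L] at [zn]. *)
Definition sweep_subgradient {Rb n1 n2} (gQ : pt Rb n1 n2 -> pt Rb n1 n2) (zo zn : pt Rb n1 n2)
    (lk mk : Fin.t Rb -> R) : pt Rb n1 n2 :=
  (fun r i => (fst zo r i - fst zn r i) / lk r - fst (gQ (mix_u zo zn r (fst zn r))) r i + fst (gQ zn) r i,
   fun r i => (snd zo r i - snd zn r i) / mk r - snd (gQ (mix_v zo zn r (snd zn r))) r i + snd (gQ zn) r i).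

Section Objective.
Context {Rb n1 n2 : nat}.
Variables (f : Fin.t Rb -> vec n1 -> ereal) (g : Fin.t Rb -> vec n2 -> ereal).
Variables (Q : pt Rb n1 n2 -> R) (gQ : pt Rb n1 n2 -> pt Rb n1 n2).
Hypothesis Q_diff : forall x eps, 0 < eps -> exists delta, 0 < delta /\ forall y, pdist y x < delta ->
  Rabs (Q y - Q x - pdot (gQ x) (psub y x)) <= eps * pdist y x.

Lemma Q_lipschitz_near x : exists delta, 0 < delta /\
  forall y, pdist y x < delta -> Rabs (Q y - Q x) <= (pnorm (gQ x) + 1) * pdist y x.
Proof.
  destruct (Q_diff x 1 ltac:(lra)) as [d [Hd Hx]]. exists d. split; auto. intros y Hy.
  specialize (Hx y Hy).
  pose proof (csum_cauchy_schwarz (coord (gQ x)) (fun i => coord y i - coord x i)) as CS.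
  change (Rabs (pdot (gQ x) (psub y x)) <= pnorm (gQ x) * pdist y x) in CS.
  pose proof (Rabs_triang (Q y - Q x - pdot (gQ x) (psub y x)) (pdot (gQ x) (psub y x))) as T.
  replace (Q y - Q x - pdot (gQ x) (psub y x) + pdot (gQ x) (psub y x)) with (Q y - Q x) in T by ring.
  lra.
Qed.

Lemma Q_cv (y : nat -> pt Rb n1 n2) x :
  Un_cv (fun k => pdist (y k) x) 0 -> Un_cv (fun k => Q (y k)) (Q x).
Proof.
  intros H eps He. destruct (Q_lipschitz_near x) as [d [Hd Hx]].
  set (K := pnorm (gQ x) + 1).
  assert (HK : 1 <= K) by (unfold K; pose proof (cnorm_nonneg (coord (gQ x))); rewrite pnorm_cnorm; lra).
  destruct (H (Rmin d (eps / K)) ltac:(apply Rmin_pos; [lra|apply Rdiv_lt_0_compat; lra])) as [N HN].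
  exists N. intros k Hk. specialize (HN k Hk). unfold R_dist in *. rewrite Rminus_0_r in HN.
  rewrite Rabs_right in HN by (apply Rle_ge, pdist_nonneg).
  pose proof (Rmin_l d (eps / K)); pose proof (Rmin_r d (eps / K)).
  specialize (Hx (y k) ltac:(lra)).
  assert (K * pdist (y k) x < K * (eps / K)) by (apply Rmult_lt_compat_l; lra).
  replace (K * (eps / K)) with eps in H2 by (field; lra). fold K in Hx. lra.
Qed.

Lemma Lfun_decompose_u zo zn r u0 v :
  Lfun f Q g (mix_u zo zn r u0) = Some v ->
  exists c, forall u, Lfun f Q g (mix_u zo zn r u) = eplus (f r u) (Some (c + Q (mix_u zo zn r u))).
Proof.
  unfold Lfun. intros H.
  apply eplus_some_inv in H as [x [y [H1 [H2 _]]]].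
  apply eplus_some_inv in H1 as [s [q [H3 _]]].
  destruct (efsum_some_inv _ _ _ H3) as [b [Hb _]].
  exists (s - b r + y). intros u.
  rewrite (efsum_replace _ _ (fun j => f j (fst (mix_u zo zn r u) j)) r s (b r) H3 (Hb r)).
  - simpl snd in *. rewrite H2. simpl fst. rewrite Nat.ltb_irrefl, Nat.eqb_refl.
    destruct (f r u); simpl; auto. f_equal; ring.
  - intros j Hj. simpl. apply Nat.eqb_neq in Hj. now rewrite Hj.
Qed.

Lemma Lfun_decompose_v zo zn r v0 v :
  Lfun f Q g (mix_v zo zn r v0) = Some v ->
  exists c, forall w, Lfun f Q g (mix_v zo zn r w) = eplus (g r w) (Some (c + Q (mix_v zo zn r w))).
Proof.
  unfold Lfun. intros H.
  apply eplus_some_inv in H as [x [y [H1 [H2 _]]]].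
  apply eplus_some_inv in H1 as [s [q [H3 _]]].
  destruct (efsum_some_inv _ _ _ H2) as [b [Hb _]].
  exists (s + y - b r). intros w.
  rewrite (efsum_replace _ _ (fun j => g j (snd (mix_v zo zn r w) j)) r y (b r) H2 (Hb r)).
  - simpl fst in *. rewrite H3. simpl snd. rewrite Nat.ltb_irrefl, Nat.eqb_refl.
    destruct (g r w); simpl; auto. f_equal; ring.
  - intros j Hj. simpl. apply Nat.eqb_neq in Hj. now rewrite Hj.
Qed.

(** Fermat's rule for a prox step on one block [m u] of the point, where
    [blk] reads that block and [m] writes it. *)
Lemma prox_optimal_frechet {n} (m : vec n -> pt Rb n1 n2) (blk : pt Rb n1 n2 -> vec n)
    (h : vec n -> ereal) lv uo us :
  0 < lv ->
  (forall u, pdist (m u) (m us) = vdist u us) ->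
  (forall u p, pdot p (psub (m u) (m us)) = vdot (blk p) (vsub u us)) ->
  prox_optimal h (fun u => Q (m u)) lv uo us ->
  vfrechet_sub h us (fun i => (uo i - us i) / lv - blk (gQ (m us)) i).
Proof.
  intros Hl Hd Hp [a [Ha Hopt]]. exists a. split; auto. intros eps He.
  destruct (Q_diff (m us) (eps / 2) ltac:(lra)) as [d1 [Hd1 H1]].
  exists (Rmin d1 (lv * eps)). split; [apply Rmin_pos; nra|].
  intros u Hu. unfold ege, ele. destruct (h u) as [b|] eqn:Eb; [|exact I].
  specialize (Hopt u b Eb).
  pose proof (Rmin_l d1 (lv * eps)); pose proof (Rmin_r d1 (lv * eps)).
  specialize (H1 (m u) ltac:(rewrite Hd; lra)). rewrite Hp, Hd in H1. apply Rabs_le_inv in H1.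
  set (w := vsub u us) in *.
  assert (E1 : vnorm2 (vsub u uo) - vnorm2 (vsub us uo)
               = 2 * fsum n (fun i => (us i - uo i) * w i) + vnorm2 w).
  { unfold vnorm2, vdot, w, vsub. rewrite <- fsum_sub, <- fsum_scal, <- fsum_add. apply fsum_ext; intros; ring. }
  assert (E2 : vdot (fun i => (uo i - us i) / lv - blk (gQ (m us)) i) w
               = - / lv * fsum n (fun i => (us i - uo i) * w i) - vdot (blk (gQ (m us))) w).
  { unfold vdot. rewrite <- fsum_scal, <- fsum_sub. apply fsum_ext; intros; field; lra. }
  rewrite E2. pose proof (vdist_sq n u us). fold w in H2. pose proof (vdist_nonneg n u us).
  assert (/ (2 * lv) * vnorm2 w <= eps / 2 * vdist u us).
  { apply (Rmult_le_reg_l (2 * lv)); [lra|]. field_simplify; [|lra]. nra. }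
  assert (/ (2 * lv) * (vnorm2 (vsub u uo) - vnorm2 (vsub us uo))
          = / lv * fsum n (fun i => (us i - uo i) * w i) + / (2 * lv) * vnorm2 w)
    by (rewrite E1; field; lra).
  nra.
Qed.

Lemma Lfun_frechet zn su sv :
  (forall r, vfrechet_sub (f r) (fst zn r) (su r)) ->
  (forall r, vfrechet_sub (g r) (snd zn r) (sv r)) ->
  frechet_sub (Lfun f Q g) zn
    (fun r i => su r i + fst (gQ zn) r i, fun r i => sv r i + snd (gQ zn) r i).
Proof.
  intros Hf Hg.
  destruct (efsum_vfrechet f (fst zn) su Hf) as [bf [Ef Hbf]].
  destruct (efsum_vfrechet g (snd zn) sv Hg) as [bg [Eg Hbg]].
  exists (fsum Rb bf + Q zn + fsum Rb bg). split.
  { unfold Lfun. now rewrite (efsum_some _ _ bf Ef), (efsum_some _ _ bg Eg). }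
  intros eps He. pose proof (pos_INR Rb) as HR.
  set (e' := eps / (2 * INR Rb + 1)).
  assert (He' : 0 < e') by (apply Rdiv_lt_0_compat; lra).
  destruct (Hbf e' He') as [d1 [Hd1 H1]], (Hbg e' He') as [d2 [Hd2 H2]].
  destruct (Q_diff zn e' He') as [dQ [HdQ HQ]].
  exists (Rmin (Rmin d1 d2) dQ). split; [apply Rmin_pos; [apply Rmin_pos|]; auto|]. intros y Hy.
  pose proof (Rmin_l (Rmin d1 d2) dQ); pose proof (Rmin_r (Rmin d1 d2) dQ).
  pose proof (Rmin_l d1 d2); pose proof (Rmin_r d1 d2).
  assert (Hy1 : pdist y zn < d1) by lra. assert (Hy2 : pdist y zn < d2) by lra.
  specialize (H1 (fst y) (fun r => Rle_lt_trans _ _ _ (vdist_fst_le y zn r) Hy1)).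
  specialize (H2 (snd y) (fun r => Rle_lt_trans _ _ _ (vdist_snd_le y zn r) Hy2)).
  assert (HQy : ege (Some (Q y)) (Q zn + pdot (gQ zn) (psub y zn) - e' * pdist y zn)).
  { specialize (HQ y ltac:(lra)). apply Rabs_le_inv in HQ. unfold ege, ele. lra. }
  eapply ege_weaken; [exact (ege_plus _ _ _ _ (ege_plus _ _ _ _ H1 HQy) H2)|].
  assert (EW : pdot (fun r i => su r i + fst (gQ zn) r i, fun r i => sv r i + snd (gQ zn) r i) (psub y zn)
     = fsum Rb (fun r => vdot (su r) (vsub (fst y r) (fst zn r)))
       + fsum Rb (fun r => vdot (sv r) (vsub (snd y r) (snd zn r))) + pdot (gQ zn) (psub y zn)).
  { unfold pdot; simpl.
    rewrite (fsum_ext _ (fun r => vdot (fun i => su r i + _) _)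
               (fun r => vdot (su r) (vsub (fst y r) (fst zn r)) + vdot (fst (gQ zn) r) (vsub (fst y r) (fst zn r))))
      by (intros; apply vdot_add_l).
    rewrite (fsum_ext _ (fun r => vdot (fun i => sv r i + _) _)
               (fun r => vdot (sv r) (vsub (snd y r) (snd zn r)) + vdot (snd (gQ zn) r) (vsub (snd y r) (snd zn r))))
      by (intros; apply vdot_add_l).
    rewrite !fsum_add. ring. }
  assert (Hsf : fsum Rb (fun r => vdist (fst y r) (fst zn r)) <= INR Rb * pdist y zn)
    by (apply fsum_le_const; intros; apply vdist_fst_le).
  assert (Hsg : fsum Rb (fun r => vdist (snd y r) (snd zn r)) <= INR Rb * pdist y zn)
    by (apply fsum_le_const; intros; apply vdist_snd_le).
  rewrite EW, !fsum_sub, !fsum_add, !fsum_scal.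
  assert (e' * (2 * INR Rb + 1) = eps) by (unfold e'; field; lra).
  pose proof (pdist_nonneg y zn). nra.
Qed.

Section Sweep.
Variables (zo zn : pt Rb n1 n2) (lk mk : Fin.t Rb -> R) (rp lo : R).
Hypothesis sweep : pam_sweep (Lfun f Q g) zo zn lk mk.
Hypothesis lk_bounds : forall r, 0 < lk r <= rp.
Hypothesis mk_bounds : forall r, 0 < mk r <= rp.
Hypothesis L_zo : Lfun f Q g zo = Some lo.

Lemma sweep_prox_optimal_u r :
  prox_optimal (f r) (fun u => Q (mix_u zo zn r u)) (lk r) (fst zo r) (fst zn r).
Proof.
  destruct (sweep_intermediate_finite _ _ _ _ _ _ _ sweep lk_bounds mk_bounds L_zo r) as [[v Hv] _].
  destruct (Lfun_decompose_u _ _ _ _ _ Hv) as [c Hc].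
  eapply prox_optimal_of_argmin; [exact Hc|eauto|apply (sweep r)].
Qed.

Lemma sweep_prox_optimal_v r :
  prox_optimal (g r) (fun v => Q (mix_v zo zn r v)) (mk r) (snd zo r) (snd zn r).
Proof.
  destruct (sweep_intermediate_finite _ _ _ _ _ _ _ sweep lk_bounds mk_bounds L_zo r) as [_ [v Hv]].
  destruct (Lfun_decompose_v _ _ _ _ _ Hv) as [c Hc].
  eapply prox_optimal_of_argmin; [exact Hc|eauto|apply (sweep r)].
Qed.

Lemma sweep_frechet : frechet_sub (Lfun f Q g) zn (sweep_subgradient gQ zo zn lk mk).
Proof.
  apply Lfun_frechet; intros r.
  - apply (prox_optimal_frechet (mix_u zo zn r) (fun p => fst p r)); [apply lk_bounds| | |apply sweep_prox_optimal_u].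
    + intros; apply mix_u_pdist.
    + intros; apply mix_u_pdot.
  - apply (prox_optimal_frechet (mix_v zo zn r) (fun p => snd p r)); [apply mk_bounds| | |apply sweep_prox_optimal_v].
    + intros; apply mix_v_pdist.
    + intros; apply mix_v_pdot.
Qed.

End Sweep.

End Objective.

Lemma sq_div_le e lv rm : 0 < rm <= lv -> e / lv * (e / lv) <= / rm * e * (/ rm * e).
Proof.
  intros H.
  replace (e / lv * (e / lv)) with ((e * e) * (/ lv * / lv)) by (field; lra).
  replace (/ rm * e * (/ rm * e)) with ((e * e) * (/ rm * / rm)) by ring.
  apply Rmult_le_compat_l; [nra|].
  assert (0 < / lv <= / rm) by (split; [apply Rinv_0_lt_compat|apply Rinv_le_contravar]; lra). nra.
Qed.

Lemma vnorm2_le_pdist_sq {Rb n1 n2} (x y : pt Rb n1 n2) r :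
  vnorm2 (vsub (fst x r) (fst y r)) <= pdist x y * pdist x y /\
  vnorm2 (vsub (snd x r) (snd y r)) <= pdist x y * pdist x y.
Proof.
  rewrite <- !vdist_sq.
  pose proof (vdist_fst_le x y r); pose proof (vdist_snd_le x y r).
  pose proof (vdist_nonneg _ (fst x r) (fst y r)); pose proof (vdist_nonneg _ (snd x r) (snd y r)).
  split; nra.
Qed.

Lemma sweep_subgradient_norm_le {Rb n1 n2} (gQ : pt Rb n1 n2 -> pt Rb n1 n2) zo zn lk mk rm G :
  0 < rm -> (forall r, rm <= lk r) -> (forall r, rm <= mk r) -> 0 <= G ->
  (forall r, pdist (gQ zn) (gQ (mix_u zo zn r (fst zn r))) <= G) ->
  (forall r, pdist (gQ zn) (gQ (mix_v zo zn r (snd zn r))) <= G) ->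
  pnorm (sweep_subgradient gQ zo zn lk mk) <= sqrt (2 * INR Rb) * G + / rm * pdist zn zo.
Proof.
  intros Hrm Hl Hm HG Hu Hv.
  set (A := fun i : Ix Rb n1 n2 => match i with
     | inl (r, t) => (fst zo r t - fst zn r t) / lk r
     | inr (r, t) => (snd zo r t - snd zn r t) / mk r end).
  set (B := fun i : Ix Rb n1 n2 => match i with
     | inl (r, t) => fst (gQ zn) r t - fst (gQ (mix_u zo zn r (fst zn r))) r t
     | inr (r, t) => snd (gQ zn) r t - snd (gQ (mix_v zo zn r (snd zn r))) r t end).
  rewrite pnorm_cnorm, (cnorm_ext _ (fun i => A i + B i)) by (intros [[r t]|[r t]]; simpl; ring).
  eapply Rle_trans; [apply cnorm_triangle|]. rewrite Rplus_comm. apply Rplus_le_compat.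
  - unfold cnorm. rewrite <- (sqrt_square G), <- sqrt_mult by (pose proof (pos_INR Rb); nra).
    apply sqrt_le_1; [apply csum_sq_nonneg|pose proof (pos_INR Rb); nra|].
    assert (Bu : forall r, fsum n1 (fun j => B (inl (r, j)) * B (inl (r, j))) <= G * G).
    { intros r. specialize (Hu r). pose proof (pdist_nonneg (gQ zn) (gQ (mix_u zo zn r (fst zn r)))).
      pose proof (proj1 (vnorm2_le_pdist_sq (gQ zn) (gQ (mix_u zo zn r (fst zn r))) r)).
      change (vnorm2 (vsub (fst (gQ zn) r) (fst (gQ (mix_u zo zn r (fst zn r))) r)) <= G * G). nra. }
    assert (Bv : forall r, fsum n2 (fun j => B (inr (r, j)) * B (inr (r, j))) <= G * G).
    { intros r. specialize (Hv r). pose proof (pdist_nonneg (gQ zn) (gQ (mix_v zo zn r (snd zn r)))).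
      pose proof (proj2 (vnorm2_le_pdist_sq (gQ zn) (gQ (mix_v zo zn r (snd zn r))) r)).
      change (vnorm2 (vsub (snd (gQ zn) r) (snd (gQ (mix_v zo zn r (snd zn r))) r)) <= G * G). nra. }
    unfold csum. pose proof (fsum_le_const _ _ _ Bu). pose proof (fsum_le_const _ _ _ Bv). lra.
  - rewrite pdist_sym, pdist_cnorm, <- (Rabs_right (/ rm)) by (apply Rle_ge, Rlt_le, Rinv_0_lt_compat; auto).
    rewrite <- cnorm_scal. apply cnorm_le. intros [[r t]|[r t]]; apply sq_div_le; auto.
Qed.

(** * Convergence of PAM *)

Lemma frechet_sub_limiting {Rb n1 n2} (L : pt Rb n1 n2 -> ereal) x w :
  frechet_sub L x w -> limiting_sub L x w.
Proof.
  intros [fx [Hx Hf]]. exists fx; split; auto.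
  exists (fun _ => x), (fun _ => w), (fun _ => fx).
  repeat split; try rewrite pdist_refl; try apply cv_const; auto.
  intros k. exists fx; auto.
Qed.

Lemma coords_from_cv {Rb n1 n2} (a b m : nat -> pt Rb n1 n2) x :
  (forall k, coords_from (a k) (b k) x (m k)) ->
  Un_cv (fun k => pdist (a k) x) 0 -> Un_cv (fun k => pdist (b k) x) 0 ->
  Un_cv (fun k => pdist (m k) x) 0.
Proof.
  intros H Ha Hb. apply (cv0_squeeze _ (fun k => pdist (a k) x + pdist (b k) x)).
  - intros k. pose proof (pdist_sq_le_coords_from _ _ _ _ (H k)).
    pose proof (pdist_nonneg (a k) x); pose proof (pdist_nonneg (b k) x); pose proof (pdist_nonneg (m k) x).
    split; [lra|nra].
  - rewrite <- (Rplus_0_r 0). now apply CV_plus.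
Qed.

Lemma prox_optimal_limsup {n} (h : vec n -> ereal) (q : nat -> vec n -> R) (lv : nat -> R)
    (uo us : nat -> vec n) x b rm :
  0 < rm -> (forall k, rm <= lv k) -> h x = Some b ->
  (forall k, prox_optimal h (q k) (lv k) (uo k) (us k)) ->
  Un_cv (fun k => vdist x (uo k)) 0 -> Un_cv (fun k => q k x - q k (us k)) 0 ->
  limsup_le (fun k => h (us k)) b.
Proof.
  intros Hrm Hlv Hx Hopt Hc Hq eps He.
  destruct (Hq (eps / 2) ltac:(lra)) as [N1 H1].
  destruct (Hc (Rmin 1 (rm * eps)) ltac:(apply Rmin_pos; nra)) as [N2 H2].
  exists (N1 + N2)%nat. intros k Hk.
  specialize (H1 k ltac:(lia)); specialize (H2 k ltac:(lia)).
  unfold R_dist in H1, H2. rewrite Rminus_0_r in H1, H2. apply Rabs_def2 in H1.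
  rewrite Rabs_right in H2 by (apply Rle_ge, vdist_nonneg).
  pose proof (Rmin_l 1 (rm * eps)); pose proof (Rmin_r 1 (rm * eps)).
  pose proof (vdist_nonneg _ x (uo k)).
  assert (Hsq : vdist x (uo k) * vdist x (uo k) <= rm * eps) by nra.
  destruct (Hopt k) as [a [-> Ha]]. specialize (Ha x b Hx). simpl.
  specialize (Hlv k).
  pose proof (vnorm2_nonneg _ (vsub (us k) (uo k))).
  rewrite <- (vdist_sq _ x (uo k)) in Ha.
  assert (/ (2 * lv k) * (vdist x (uo k) * vdist x (uo k)) <= eps / 2).
  { apply (Rmult_le_reg_l (2 * lv k)); [lra|]. field_simplify; [|lra]. nra. }
  assert (0 <= / (2 * lv k) * vnorm2 (vsub (us k) (uo k)))
    by (apply Rmult_le_pos; [apply Rlt_le, Rinv_0_lt_compat; lra|auto]).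
  lra.
Qed.

Section Summable.
Context {Rb n1 n2 : nat}.
Variable z : nat -> pt Rb n1 n2.

Local Notation partial n := (sum_f_R0 (fun k => pdist (z (S k)) (z k)) n).

Lemma pdist_le_partial_sums n m : pdist (z (S m)) (z (S n)) <= Rabs (partial m - partial n).
Proof.
  assert (Mono : forall a b, (a <= b)%nat -> pdist (z (S b)) (z (S a)) <= partial b - partial a).
  { induction 1 as [|b _ IH]; [rewrite pdist_refl; lra|].
    rewrite tech5. pose proof (pdist_triangle (z (S (S b))) (z (S b)) (z (S a))). lra. }
  destruct (Nat.le_ge_cases n m) as [Le|Le].
  - pose proof (Mono _ _ Le). pose proof (Rle_abs (partial m - partial n)). lra.
  - pose proof (Mono _ _ Le). rewrite pdist_sym, <- Rabs_Ropp, Ropp_minus_distr.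
    pose proof (Rle_abs (partial n - partial m)). lra.
Qed.

(** Completeness of [R] is used coordinatewise. *)
Lemma pt_cv_of_summable_steps s : Un_cv (fun n => partial n) s -> exists zs, Un_cv (fun k => pdist (z k) zs) 0.
Proof.
  intros Hs. pose proof (CV_Cauchy _ (exist _ s Hs)) as HC.
  assert (Hcau : forall i, Cauchy_crit (fun k => coord (z (S k)) i)).
  { intros i eps He. destruct (HC eps He) as [N HN]. exists N. intros n m Hn Hm.
    eapply Rle_lt_trans; [|apply (HN n m Hn Hm)].
    eapply Rle_trans; [apply coord_dist_le|apply pdist_le_partial_sums]. }
  set (zs := of_coord (fun i => proj1_sig (R_complete _ (Hcau i)))).
  assert (Hi : forall i, Un_cv (fun k => coord (z (S k)) i - coord zs i) 0).
  { intros i. unfold zs. rewrite coord_of_coord, <- (Rminus_diag (proj1_sig (R_complete _ (Hcau i)))).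
    apply CV_minus; [exact (proj2_sig (R_complete _ (Hcau i)))|apply cv_const]. }
  assert (Hsq : Un_cv (fun k => csum (fun i => (coord (z (S k)) i - coord zs i) * (coord (z (S k)) i - coord zs i))) 0).
  { replace 0 with (csum (fun _ : Ix Rb n1 n2 => 0 * 0)) by (rewrite csum_scal; ring).
    apply csum_cv. intros i. now apply CV_mult. }
  exists zs. apply cv_unshift1. exact (cv0_sqrt _ (fun k => csum_sq_nonneg _) Hsq).
Qed.

End Summable.

Lemma series_terms_cv0 (a : nat -> R) s : Un_cv (fun n => sum_f_R0 a n) s -> Un_cv a 0.
Proof.
  intros H. apply cv_unshift1.
  assert (E : Un_cv (fun n => sum_f_R0 a (S n) - sum_f_R0 a n) (s - s))
    by (apply CV_minus; [exact (cv_shift1 _ _ H)|exact H]).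
  rewrite Rminus_diag in E. intros eps He. destruct (E eps He) as [N HN]. exists N. intros n Hn.
  specialize (HN n Hn). rewrite tech5 in HN.
  replace (sum_f_R0 a n + a (S n) - sum_f_R0 a n) with (a (S n)) in HN by ring. exact HN.
Qed.

Lemma blocks_nonempty {Rb n1 n2} (x y : pt Rb n1 n2) : x <> y -> (1 <= Rb)%nat.
Proof. intros H. destruct Rb; [|lia]. exfalso. apply H, pdist_eq0, pdist_no_blocks. Qed.

Section Lipschitz.
Context {Rb n1 n2 : nat}.
Variables (h : pt Rb n1 n2 -> pt Rb n1 n2) (c : pt Rb n1 n2) (rho C : R).
Hypothesis h_lip : forall x y, pdist x c < sqrt (2 * INR Rb) * rho -> pdist y c < sqrt (2 * INR Rb) * rho ->
  pdist (h x) (h y) <= C * pdist x y.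

Lemma lipschitz_const_nonneg x : x <> c -> 0 < rho -> 0 <= C.
Proof.
  intros Hx Hrho. pose proof (blocks_nonempty _ _ Hx) as HRb.
  set (rad := sqrt (2 * INR Rb) * rho).
  assert (Hrad : 0 < rad) by (apply Rmult_lt_0_compat; [apply sqrt_lt_R0; apply (le_INR 1) in HRb; simpl in HRb|]; lra).
  assert (Dx : 0 < pdist x c).
  { destruct (Rle_lt_or_eq_dec 0 (pdist x c) (pdist_nonneg x c)) as [|E]; auto.
    exfalso. apply Hx, pdist_eq0. auto. }
  set (t := rad / (2 * pdist x c)).
  set (y := of_coord (fun i => coord c i + t * (coord x i - coord c i))).
  assert (Ey : pdist y c = rad / 2).
  { rewrite pdist_cnorm, (cnorm_ext _ (fun i => t * (coord x i - coord c i))).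
    - rewrite cnorm_scal, <- pdist_cnorm, Rabs_right; [unfold t; field; lra|].
      apply Rle_ge, Rlt_le, Rdiv_lt_0_compat; lra.
    - intros i. unfold y. rewrite coord_of_coord. ring. }
  assert (Hc : pdist c c < rad) by (rewrite pdist_refl; lra).
  assert (Hy : pdist y c < rad) by lra.
  pose proof (h_lip c y Hc Hy) as H.
  rewrite (pdist_sym c y), Ey in H. pose proof (pdist_nonneg (h c) (h y)). nra.
Qed.

Lemma lipschitz_gap_coords_from zo zn m :
  (forall x, coords_from zo zn x m) -> (1 <= Rb)%nat -> 0 <= C ->
  pdist zo c < rho -> pdist zn c < rho -> pdist (h zn) (h m) <= C * pdist zn zo.
Proof.
  intros Hm HRb HC Ho Hn.
  pose proof (pdist_nonneg zo c); pose proof (pdist_nonneg zn c); pose proof (pdist_nonneg m c).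
  assert (Hs : sqrt 2 <= sqrt (2 * INR Rb)) by (apply sqrt_le_1_alt; apply (le_INR 1) in HRb; simpl in HRb; lra).
  assert (Hs1 : 1 <= sqrt 2) by (rewrite <- sqrt_1; apply sqrt_le_1_alt; lra).
  assert (Mc : pdist m c < sqrt 2 * rho).
  { pose proof (pdist_sq_le_coords_from _ _ _ _ (Hm c)).
    rewrite <- (sqrt_square (pdist m c)), <- (sqrt_square rho), <- sqrt_mult by nra.
    apply sqrt_lt_1; nra. }
  assert (Mn : pdist zn m <= pdist zn zo).
  { pose proof (pdist_sq_le_coords_from _ _ _ _ (Hm zn)). rewrite pdist_refl in H2.
    rewrite (pdist_sym zn m), (pdist_sym zn zo).
    pose proof (pdist_nonneg m zn); pose proof (pdist_nonneg zo zn). nra. }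
  pose proof (h_lip zn m ltac:(nra) ltac:(nra)). nra.
Qed.

End Lipschitz.

Lemma Lfun_liminf {Rb n1 n2} f g (Q : pt Rb n1 n2 -> R) gQ
  (Q_diff : forall x eps, 0 < eps -> exists delta, 0 < delta /\ forall y, pdist y x < delta ->
     Rabs (Q y - Q x - pdot (gQ x) (psub y x)) <= eps * pdist y x) :
  (forall r, lsc_wrt vdist (f r)) -> (forall r, lsc_wrt vdist (g r)) ->
  forall (y : nat -> pt Rb n1 n2) x, Un_cv (fun k => pdist (y k) x) 0 ->
  liminf_ge (fun k => Lfun f Q g (y k)) (Lfun f Q g x).
Proof.
  intros Hf Hg y x Hy. apply liminf_ge_plus; [apply liminf_ge_plus|].
  - apply liminf_ge_efsum. intros r c Hc. apply (Hf r (fst x r) (fun k => fst (y k) r)); auto.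
    apply (cv0_squeeze _ _ (fun k => conj (vdist_nonneg _ _ _) (vdist_fst_le (y k) x r)) Hy).
  - apply liminf_ge_cv, (Q_cv Q gQ Q_diff y x Hy).
  - apply liminf_ge_efsum. intros r c Hc. apply (Hg r (snd x r) (fun k => snd (y k) r)); auto.
    apply (cv0_squeeze _ _ (fun k => conj (vdist_nonneg _ _ _) (vdist_snd_le (y k) x r)) Hy).
Qed.

Section PAM.
Context {Rb n1 n2 : nat}.
Variables (f : Fin.t Rb -> vec n1 -> ereal) (g : Fin.t Rb -> vec n2 -> ereal).
Variables (Q : pt Rb n1 n2 -> R) (gQ : pt Rb n1 n2 -> pt Rb n1 n2).
Hypothesis Q_diff : forall x eps, 0 < eps -> exists delta, 0 < delta /\ forall y, pdist y x < delta ->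
  Rabs (Q y - Q x - pdot (gQ x) (psub y x)) <= eps * pdist y x.
Hypothesis f_lsc : forall r, lsc_wrt vdist (f r).
Hypothesis g_lsc : forall r, lsc_wrt vdist (g r).
Variables (z : nat -> pt Rb n1 n2) (lam mu : nat -> Fin.t Rb -> R) (rm rp : R).
Hypothesis rm_rp : 0 < rm < rp.
Hypothesis lam_bounds : forall k r, rm < lam k r < rp.
Hypothesis mu_bounds : forall k r, rm < mu k r < rp.
Hypothesis pam : PAM_seq (Lfun f Q g) lam mu z.
Variable l : nat -> R.
Hypothesis L_z : forall k, Lfun f Q g (z k) = Some (l k).

Let lam_pos k r : 0 < lam k r <= rp.
Proof. specialize (lam_bounds k r); lra. Qed.
Let mu_pos k r : 0 < mu k r <= rp.
Proof. specialize (mu_bounds k r); lra. Qed.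

Lemma pam_sufficient_decrease k :
  l (S k) + / (2 * rp) * (pdist (z (S k)) (z k) * pdist (z (S k)) (z k)) <= l k.
Proof. exact (sweep_sufficient_decrease _ _ _ _ _ _ _ (pam k) (lam_pos k) (mu_pos k) (L_z k) _ (L_z (S k))). Qed.

Lemma pam_values_decr k : l (S k) <= l k.
Proof.
  pose proof (pam_sufficient_decrease k).
  assert (0 <= / (2 * rp) * (pdist (z (S k)) (z k) * pdist (z (S k)) (z k)))
    by (apply Rmult_le_pos; [apply Rlt_le, Rinv_0_lt_compat; lra|apply Rle_0_sqr]).
  lra.
Qed.

Lemma pam_values_le_first k : l k <= l 0%nat.
Proof. induction k; [lra|]. pose proof (pam_values_decr k); lra. Qed.

Lemma pam_frechet k :
  frechet_sub (Lfun f Q g) (z (S k)) (sweep_subgradient gQ (z k) (z (S k)) (lam k) (mu k)).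
Proof. exact (sweep_frechet f g Q gQ Q_diff _ _ _ _ _ _ (pam k) (lam_pos k) (mu_pos k) (L_z k)). Qed.

Section Limit.
Variable zs : pt Rb n1 n2.
Hypothesis z_cv : Un_cv (fun k => pdist (z k) zs) 0.

Let z_cv_sym : Un_cv (fun k => pdist zs (z k)) 0.
Proof. intros e He. destruct (z_cv e He) as [N HN]. exists N. intros k Hk. rewrite pdist_sym. now apply HN. Qed.

Let zS_cv : Un_cv (fun k => pdist (z (S k)) zs) 0.
Proof. exact (cv_shift1 _ _ z_cv). Qed.

Let Q_mix_cv (m : nat -> pt Rb n1 n2) :
  (forall k, coords_from (z k) (z (S k)) zs (m k)) -> Un_cv (fun k => Q (m k)) (Q zs).
Proof. intros H. apply (Q_cv Q gQ Q_diff). now apply (coords_from_cv (fun k => z k) (fun k => z (S k))). Qed.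

Let Q_mix_gap_cv (m1 m2 : nat -> pt Rb n1 n2) :
  (forall k, coords_from (z k) (z (S k)) zs (m1 k)) -> (forall k, coords_from (z k) (z (S k)) zs (m2 k)) ->
  Un_cv (fun k => Q (m1 k) - Q (m2 k)) 0.
Proof. intros H1 H2. rewrite <- (Rminus_diag (Q zs)). apply CV_minus; now apply Q_mix_cv. Qed.

Lemma pam_limit_value : exists fx, Lfun f Q g zs = Some fx /\ Un_cv l fx.
Proof.
  pose proof (Lfun_liminf f g Q gQ Q_diff f_lsc g_lsc z zs z_cv) as Hinf.
  destruct (Lfun f Q g zs) as [fx|] eqn:EL.
  2:{ exfalso. destruct (Hinf (l 0%nat + 1) I) as [N HN]. specialize (HN N (le_n _)).
      rewrite L_z in HN. simpl in HN. pose proof (pam_values_le_first N). lra. }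
  exists fx. split; auto.
  pose proof EL as EL'. unfold Lfun in EL'.
  apply eplus_some_inv in EL' as [x1 [y1 [X1 [X2 ->]]]].
  apply eplus_some_inv in X1 as [s1 [q1 [X4 [X5 ->]]]]. injection X5 as <-.
  destruct (efsum_some_inv _ _ _ X4) as [bf [Hbf ->]].
  destruct (efsum_some_inv _ _ _ X2) as [bg [Hbg ->]].
  apply (CV_shift l 1). apply cv_of_liminf_limsup.
  - intros c Hc. destruct (Hinf c Hc) as [N HN]. exists N. intros k Hk.
    rewrite <- L_z. apply HN. lia.
  - replace (fun k => Some (l (k + 1)%nat)) with (fun k => Lfun f Q g (z (S k)))
      by (apply functional_extensionality; intros k; now rewrite L_z, Nat.add_1_r).
    (* test each prox step against the corresponding block of [zs] *)
    apply limsup_le_plus; [apply limsup_le_plus|].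
    + apply limsup_le_efsum. intros r.
      apply (prox_optimal_limsup _ (fun k u => Q (mix_u (z k) (z (S k)) r u)) (fun k => lam k r)
               (fun k => fst (z k) r) (fun k => fst (z (S k)) r) (fst zs r) (bf r) rm); auto.
      * lra.
      * intros k; specialize (lam_bounds k r); lra.
      * intros k. exact (sweep_prox_optimal_u f g Q _ _ _ _ _ _ (pam k) (lam_pos k) (mu_pos k) (L_z k) r).
      * apply (cv0_squeeze _ _ (fun k => conj (vdist_nonneg _ _ _) (vdist_fst_le zs (z k) r))).
        exact z_cv_sym.
      * apply Q_mix_gap_cv; intros k; apply mix_u_coords_from; auto.
    + now apply limsup_le_cv, (Q_cv Q gQ Q_diff (fun k => z (S k))).
    + apply limsup_le_efsum. intros r.
      apply (prox_optimal_limsup _ (fun k v => Q (mix_v (z k) (z (S k)) r v)) (fun k => mu k r)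
               (fun k => snd (z k) r) (fun k => snd (z (S k)) r) (snd zs r) (bg r) rm); auto.
      * lra.
      * intros k; specialize (mu_bounds k r); lra.
      * intros k. exact (sweep_prox_optimal_v f g Q _ _ _ _ _ _ (pam k) (lam_pos k) (mu_pos k) (L_z k) r).
      * apply (cv0_squeeze _ _ (fun k => conj (vdist_nonneg _ _ _) (vdist_snd_le zs (z k) r))).
        exact z_cv_sym.
      * apply Q_mix_gap_cv; intros k; apply mix_v_coords_from; auto.
Qed.

Lemma pam_limit_critical :
  Un_cv (fun k => pnorm (sweep_subgradient gQ (z k) (z (S k)) (lam k) (mu k))) 0 ->
  limiting_sub (Lfun f Q g) zs pzero.
Proof.
  intros Hw. destruct pam_limit_value as [fx [EL Hl]].
  exists fx. split; auto.
  exists (fun k => z (S k)), (fun k => sweep_subgradient gQ (z k) (z (S k)) (lam k) (mu k)), (fun k => l (S k)).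
  split; [intros; apply L_z|]. split; [exact zS_cv|]. split; [exact (cv_shift1 _ _ Hl)|].
  split; [exact pam_frechet|].
  intros e He. destruct (Hw e He) as [N HN]. exists N. intros k Hk. rewrite pdist_pzero. now apply HN.
Qed.

End Limit.

Section Localization.
Variables (zbar : pt Rb n1 n2) (lbar rho C : R) (eta : ereal) (phi dphi : R -> R).
Variable U : pt Rb n1 n2 -> Prop.
Hypothesis L_zbar : Lfun f Q g zbar = Some lbar.
Hypothesis l_above : forall k, lbar < l k /\ below eta (l k - lbar).
Hypothesis rho_pos : 0 < rho.
Hypothesis ball_in_U : forall x, pdist x zbar < rho -> U x.
Hypothesis grad_lip : forall x y, pdist x zbar < sqrt (2 * INR Rb) * rho -> pdist y zbar < sqrt (2 * INR Rb) * rho ->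
  pdist (gQ x) (gQ y) <= C * pdist x y.
Hypothesis phi_nonneg : forall s, 0 <= s -> below eta s -> 0 <= phi s.
Hypothesis phi_concave : forall s t a, 0 <= s -> below eta s -> 0 <= t -> below eta t -> 0 <= a <= 1 ->
  a * phi s + (1 - a) * phi t <= phi (a * s + (1 - a) * t).
Hypothesis dphi_spec : forall s, 0 < s -> below eta s -> derivable_pt_lim phi s (dphi s) /\ 0 < dphi s.
Hypothesis small_start : 2 * rp * (C * sqrt (2 * INR Rb) + / rm) * phi (l 0%nat - lbar)
  + 2 * sqrt (2 * rp) * sqrt (l 0%nat - lbar) + pdist (z 0%nat) zbar < rho.
Hypothesis kl_ineq : forall x fx, U x -> Lfun f Q g x = Some fx -> lbar < fx -> below eta (fx - lbar) ->
  forall w, limiting_sub (Lfun f Q g) x w -> 1 <= dphi (fx - lbar) * pnorm w.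

Local Notation step k := (pdist (z (S k)) (z k)).
Local Notation ph k := (phi (l k - lbar)).
Local Notation K := (C * sqrt (2 * INR Rb) + / rm).
Local Notation w k := (sweep_subgradient gQ (z k) (z (S k)) (lam k) (mu k)).

Let z0_ne_zbar : z 0%nat <> zbar.
Proof. intros E. pose proof (L_z 0). rewrite E, L_zbar in H. injection H as E'. pose proof (l_above 0). lra. Qed.

Let Rb_pos : (1 <= Rb)%nat.
Proof. exact (blocks_nonempty _ _ z0_ne_zbar). Qed.

Let C_nonneg : 0 <= C.
Proof. exact (lipschitz_const_nonneg gQ zbar rho C grad_lip _ z0_ne_zbar rho_pos). Qed.

Lemma pam_step_le k : step k <= sqrt (2 * rp) * sqrt (l k - lbar).
Proof.
  pose proof (pam_sufficient_decrease k). pose proof (l_above (S k)). pose proof (l_above k).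
  pose proof (pdist_nonneg (z (S k)) (z k)).
  rewrite <- sqrt_mult by lra. rewrite <- (sqrt_square (step k)) by auto.
  apply sqrt_le_1; [nra|nra|].
  replace (step k * step k) with (2 * rp * (/ (2 * rp) * (step k * step k))) by (field; lra). nra.
Qed.

Lemma pam_phi_nonneg k : 0 <= ph k.
Proof. destruct (l_above k). apply phi_nonneg; auto; lra. Qed.

Lemma pam_phi_tangent k : ph (S k) <= ph k + dphi (l k - lbar) * (l (S k) - l k).
Proof.
  destruct (l_above k) as [A1 A2], (l_above (S k)) as [B1 B2].
  pose proof (concave_le_tangent phi dphi eta (l k - lbar) (l (S k) - lbar) phi_concave
                (proj1 (dphi_spec (l k - lbar) ltac:(lra) A2)) ltac:(lra) A2 ltac:(lra) B2).
  replace (l (S k) - lbar - (l k - lbar)) with (l (S k) - l k) in H by ring. exact H.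
Qed.

Lemma pam_phi_decr k : ph (S k) <= ph k.
Proof.
  pose proof (pam_phi_tangent k). pose proof (pam_values_decr k).
  destruct (l_above k). pose proof (proj2 (dphi_spec (l k - lbar) ltac:(lra) ltac:(auto))). nra.
Qed.

Lemma pam_subgradient_local k : pdist (z k) zbar < rho -> pdist (z (S k)) zbar < rho ->
  pnorm (w k) <= K * step k.
Proof.
  intros Bk Bk1. pose proof (pdist_nonneg (z (S k)) (z k)).
  eapply Rle_trans; [apply (sweep_subgradient_norm_le gQ _ _ _ _ rm (C * step k))|].
  - lra.
  - intros r; specialize (lam_bounds k r); lra.
  - intros r; specialize (mu_bounds k r); lra.
  - now apply Rmult_le_pos.
  - intros r. apply (lipschitz_gap_coords_from gQ zbar rho); auto.
    intros x; apply mix_u_coords_from; auto.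
  - intros r. apply (lipschitz_gap_coords_from gQ zbar rho); auto.
    intros x; apply mix_v_coords_from; auto.
  - right; ring.
Qed.

Lemma pam_kl_recurrence k : pdist (z k) zbar < rho -> pdist (z (S k)) zbar < rho ->
  kl_recurrence_at (fun k => step k) (fun k => ph k) (2 * rp * K) k.
Proof.
  intros Bk Bk1. unfold kl_recurrence_at.
  destruct (l_above (S k)) as [A1 A2].
  pose proof (proj2 (dphi_spec (l (S k) - lbar) ltac:(lra) A2)) as Dpos.
  assert (KL : 1 <= dphi (l (S k) - lbar) * (K * step k)).
  { eapply Rle_trans; [apply (kl_ineq (z (S k)) (l (S k))); auto|].
    - apply frechet_sub_limiting, pam_frechet.
    - apply Rmult_le_compat_l; [lra|]. now apply pam_subgradient_local. }
  pose proof (pam_phi_tangent (S k)). pose proof (pam_sufficient_decrease (S k)).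
  apply (kl_step_estimate (dphi (l (S k) - lbar)) _ (l (S k) - lbar) (l (S (S k)) - lbar));
    auto using pdist_nonneg.
  - lra.
  - replace (dphi (l (S k) - lbar) * (l (S k) - lbar - (l (S (S k)) - lbar)))
      with (- (dphi (l (S k) - lbar) * (l (S (S k)) - l (S k)))) by ring. lra.
  - replace (step (S k) * step (S k)) with (2 * rp * (/ (2 * rp) * (step (S k) * step (S k)))) by (field; lra).
    apply Rmult_le_compat_l; lra.
Qed.

Let M_nonneg : 0 <= 2 * rp * K.
Proof.
  pose proof (sqrt_pos (2 * INR Rb)). pose proof (Rinv_0_lt_compat rm ltac:(lra)).
  apply Rmult_le_pos; [lra|]. pose proof (Rmult_le_pos _ _ C_nonneg H). lra.
Qed.

Lemma pam_iterates_in_ball k : pdist (z k) zbar < rho.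
Proof.
  apply (kl_recurrence_trapped (fun k => step k) (fun k => ph k) (2 * rp * K)
           (fun k => pdist_nonneg _ _) pam_phi_nonneg pam_phi_decr M_nonneg
           (fun k => pdist (z k) zbar) rho (sqrt (2 * rp) * sqrt (l 0%nat - lbar))).
  - intros j. pose proof (pdist_triangle (z (S j)) (z j) zbar). lra.
  - apply pam_step_le.
  - apply pam_kl_recurrence.
  - lra.
Qed.

Lemma pam_tail_sum k : exists s,
  infinite_sum (fun j => pdist (z (k + 2 + j)%nat) (z (k + 1 + j)%nat)) s /\
  s <= 2 * rp * K * ph k + sqrt (2 * rp) * sqrt (l k - lbar).
Proof.
  assert (E : forall n, sum_f_R0 (fun j => pdist (z (k + 2 + j)%nat) (z (k + 1 + j)%nat)) n
                        = sum_f_R0 (fun j => step (k + 1 + j)%nat) n).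
  { intros n. apply sum_eq. intros j _. now replace (k + 2 + j)%nat with (S (k + 1 + j)) by lia. }
  destruct (series_cv_of_bounded (fun j => pdist (z (k + 2 + j)%nat) (z (k + 1 + j)%nat))
              (2 * rp * K * ph k + sqrt (2 * rp) * sqrt (l k - lbar))) as [s Hs];
    [intros; apply pdist_nonneg| |now exists s].
  intros n. rewrite E. pose proof (pam_step_le k).
  enough (sum_f_R0 (fun j => step (k + 1 + j)%nat) n <= 2 * rp * K * ph k + step k) by lra.
  apply (kl_recurrence_tail (fun k => step k) (fun k => ph k) (2 * rp * K)
           (fun k => pdist_nonneg _ _) pam_phi_nonneg pam_phi_decr M_nonneg k n).
  intros j. apply pam_kl_recurrence; apply pam_iterates_in_ball.
Qed.

Lemma pam_steps_summable : exists s, Un_cv (fun n => sum_f_R0 (fun k => step k) n) s.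
Proof.
  destruct (series_cv_of_bounded (fun k => step k) (2 * (step 0%nat) + 2 * rp * K * ph 0%nat))
    as [s [Hs _]]; eauto.
  - intros; apply pdist_nonneg.
  - intros [|n].
    + simpl. pose proof (pdist_nonneg (z 1%nat) (z 0%nat)). pose proof (pam_phi_nonneg 0).
      pose proof (Rmult_le_pos _ _ M_nonneg H0). lra.
    + rewrite decomp_sum by lia. simpl pred.
      pose proof (kl_recurrence_tail (fun k => step k) (fun k => ph k) (2 * rp * K)
                    (fun k => pdist_nonneg _ _) pam_phi_nonneg pam_phi_decr M_nonneg 0 n
                    (fun j => pam_kl_recurrence _ (pam_iterates_in_ball _) (pam_iterates_in_ball _))).
      simpl in H. lra.
Qed.

Lemma pam_kl_convergence :
  (exists zs, Un_cv (fun k => pdist (z k) zs) 0 /\ limiting_sub (Lfun f Q g) zs pzero) /\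
  (forall k, pdist (z k) zbar < rho /\
     exists s, infinite_sum (fun j => pdist (z (k + 2 + j)%nat) (z (k + 1 + j)%nat)) s /\
       s <= 2 * rp * K * ph k + sqrt (2 * rp) * sqrt (l k - lbar)).
Proof.
  destruct pam_steps_summable as [s Hs]. split.
  - destruct (pt_cv_of_summable_steps z s Hs) as [zs Hzs]. exists zs. split; auto.
    apply (pam_limit_critical zs Hzs), (cv0_squeeze _ (fun k => K * step k)).
    + intros k. split; [rewrite pnorm_cnorm; apply cnorm_nonneg|].
      apply pam_subgradient_local; apply pam_iterates_in_ball.
    + rewrite <- (Rmult_0_r K). apply CV_mult; [apply cv_const|exact (series_terms_cv0 _ _ Hs)].
  - intros k. split; [apply pam_iterates_in_ball|apply pam_tail_sum].
Qed.

End Localization.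

End PAM.

Theorem mainTheorem13
  (Rb n1 n2 : nat)
  (f : Fin.t Rb -> vec n1 -> ereal) (g : Fin.t Rb -> vec n2 -> ereal)
  (Q : pt Rb n1 n2 -> R) (gQ : pt Rb n1 n2 -> pt Rb n1 n2)
  (* (H) *)
  (Hf : forall r, proper (f r) /\ lsc_wrt vdist (f r))
  (Hg : forall r, proper (g r) /\ lsc_wrt vdist (g r))
  (HQ : is_C1_with_grad Q gQ)
  (HQlip : lip_on_bounded gQ)
  (* PAM data *)
  (z : nat -> pt Rb n1 n2) (lam mu : nat -> Fin.t Rb -> R) (rm rp : R)
  (* (H1) *)
  (Hinf : exists m : R, forall w, ege (Lfun f Q g w) m)
  (Hprop0 : proper (fun u => Lfun f Q g (repl_u1 (z 0%nat) u)))
  (Hr : 0 < rm < rp)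
  (Hlam : forall k r, rm < lam k r < rp)
  (Hmu : forall k r, rm < mu k r < rp)
  (HPAM : PAM_seq (Lfun f Q g) lam mu z)
  (* KL property at zbar *)
  (zbar : pt Rb n1 n2) (eta : ereal) (U : pt Rb n1 n2 -> Prop) (phi : R -> R)
  (HKL : KL_at (Lfun f Q g) zbar eta U phi)
  (rho : R) (Hrho : 0 < rho)
  (HU : forall x, pdist x zbar < rho -> U x)
  (C : R)
  (HC : forall x y, pdist x zbar < sqrt (2 * INR Rb) * rho -> pdist y zbar < sqrt (2 * INR Rb) * rho ->
          pdist (gQ x) (gQ y) <= C * pdist x y)
  (lbar : R) (l : nat -> R)
  (Hlbar : Lfun f Q g zbar = Some lbar)
  (Hl : forall k, Lfun f Q g (z k) = Some (l k))
  (Hlk : forall k, lbar < l k /\ below eta (l k - lbar))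
  (Hsmall : 2 * rp * (C * sqrt (2 * INR Rb) + / rm) * phi (l 0%nat - lbar)
            + 2 * sqrt (2 * rp) * sqrt (l 0%nat - lbar) + pdist (z 0%nat) zbar < rho) :
  (exists zs : pt Rb n1 n2,
      Un_cv (fun k => pdist (z k) zs) 0 /\ limiting_sub (Lfun f Q g) zs pzero) /\
  (forall k : nat,
      pdist (z k) zbar < rho /\
      exists s : R,
        infinite_sum (fun j => pdist (z (k + 2 + j)%nat) (z (k + 1 + j)%nat)) s /\
        s <= 2 * rp * (C * sqrt (2 * INR Rb) + / rm) * phi (l k - lbar)
             + sqrt (2 * rp) * sqrt (l k - lbar)).
Proof.
  destruct HQ as [Q_diff _].
  destruct HKL as [_ [_ [_ [_ [phi_nonneg [_ [phi_concave [dphi [dphi_spec [_ kl_ineq]]]]]]]]]].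
  exact (pam_kl_convergence f g Q gQ Q_diff (fun r => proj2 (Hf r)) (fun r => proj2 (Hg r))
           z lam mu rm rp Hr Hlam Hmu HPAM l Hl zbar lbar rho C eta phi dphi U Hlbar Hlk Hrho HU HC
           phi_nonneg phi_concave dphi_spec Hsmall
           (fun x fx Ux Lx => kl_ineq x fx lbar Ux Hlbar Lx)).
Qed.
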